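(* Let $D=[a_1,b_1]\times[a_2,b_2]\subset\mathbb R^2$ and let $\psi\in C(D\times\mathbb R^3)$ satisfy $\psi(s,y)=\psi(s,y+m)$ for all $m\in\mathbb Z^3$ and $(s,y)\in D\times\mathbb R^3$. Let $Y:[a_2,b_2]\to\mathbb R^3$ be a $C^1$ function such that for every $m\in\mathbb Z^3$ with $m\ne0$: (1) for all sufficiently small $\delta>0$, the set $\{s_2\in[a_2,b_2]:|m\cdot Y'(s_2)|\le\delta\}$ is contained in a finite union of intervals (their number may depend on $m$ and $\delta$), and (2) the sum of the lengths of these intervals tends to $0$ as $\delta\to0$. Then $$\lim_{\varepsilon\to0^+}\int_D\psi\Big(s,\frac{Y(s_2)}{\varepsilon}\Big)\,ds=\int_D\int_{[0,1]^3}\psi(s,y)\,dy\,ds,\qquad s=(s_1,s_2).$$ *)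

From Stdlib Require Import Reals Lra List ClassicalEpsilon.
Open Scope R_scope.

Definition RInt_val (f : R -> R) (a b : R) (v : R) : Prop :=
  exists pr : Riemann_integrable f a b, RiemannInt pr = v.

(* Total Riemann integral: the Riemann integral when it exists, 0 otherwise. *)
Definition Rint (f : R -> R) (a b : R) : R :=
  match excluded_middle_informative (exists v, RInt_val f a b v) with
  | left H => proj1_sig (constructive_indefinite_description _ H)
  | right _ => 0
  end.

Definition cont5_on (P : R -> R -> R -> R -> R -> Prop)
  (f : R -> R -> R -> R -> R -> R) : Prop :=
  forall x1 x2 x3 x4 x5, P x1 x2 x3 x4 x5 ->
  forall eps, 0 < eps -> exists del, 0 < del /\
  forall y1 y2 y3 y4 y5, P y1 y2 y3 y4 y5 ->
    Rabs (y1 - x1) < del -> Rabs (y2 - x2) < del -> Rabs (y3 - x3) < del ->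
    Rabs (y4 - x4) < del -> Rabs (y5 - x5) < del ->
    Rabs (f y1 y2 y3 y4 y5 - f x1 x2 x3 x4 x5) < eps.

Definition deriv_within (a b : R) (f f' : R -> R) : Prop :=
  forall s, a <= s <= b ->
  forall eps, 0 < eps -> exists del, 0 < del /\
  forall h, h <> 0 -> Rabs h < del -> a <= s + h <= b ->
    Rabs ((f (s + h) - f s) / h - f' s) < eps.

Definition C1_on (a b : R) (f f' : R -> R) : Prop :=
  deriv_within a b f f' /\ (forall s, a <= s <= b -> continuity_pt f' s).

Definition total_length (l : list (R * R)) : R :=
  fold_right (fun p acc => (snd p - fst p) + acc) 0 l.

From Stdlib Require Import Reals List.
From Stdlib Require Import Lra Lia FunctionalExtensionality Classical ClassicalEpsilon.
From Coquelicot Require Import Coquelicot.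
Open Scope R_scope.

(* Write points of R^5 as (s2, s1, y) and let Psi be psi extended outside D by
   clamping s; Psi is bounded, uniformly continuous (BUC) and Z^3-periodic in y.
   Say that a BUC function G homogenizes (Homog G) when the oscillating integral
   L_eps G = int_D G(s, Y(s2)/eps) ds tends to the mean
   M G = int_D int_[0,1]^3 G(s,y) dy ds as eps -> 0+.  The proof has four steps.
   1. Homogenizing functions form a linear space closed under uniform limits.
   2. Every Fourier mode C(s) cos(2 pi m.y + th) homogenizes: for m = 0 this is
      trivial; for m <> 0 the mean is 0 and L_eps reduces to a one-dimensional
      oscillatory integral int C'(s2) cos(2 pi m.Y(s2)/eps + th) ds2, which tends
      to 0 because m.Y' has thin sublevel sets ([oscillatory_decay]).
   3. The convolution of Psi in y with the de la Vallee-Poussin kernel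
      (1 + cos 2 pi x)^N is a finite combination of modes, hence homogenizes,
      and converges uniformly to Psi as N grows.
   4. Hence Psi homogenizes, and the theorem follows by identifying the total
      integrals Rint of the statement with Coquelicot's RInt. *)

(* Products with R
   are again closeness spaces, so R^n is built as nested pairs and uniform
   continuity and parametric integrals are developed once for all n. *)
Record CS := mkCS {
  cT :> Type;
  cl : R -> cT -> cT -> Prop;
  cl_refl : forall d x, 0 < d -> cl d x x;
  cl_mono : forall d d' x y, d <= d' -> cl d x y -> cl d' x y;
  cl_tri : forall d d' x y z, cl d x y -> cl d' y z -> cl (d + d') x z }.
Arguments cl {c}.

Definition CSU : CS.
refine (mkCS unit (fun _ _ _ => True) _ _ _); auto.
Defined.

Definition CSP (X : CS) : CS.
refine (mkCS (cT X * R) (fun d p q => cl d (fst p) (fst q) /\ Rabs (snd p - snd q) < d) _ _ _).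
- intros d [x t] H; split; [apply cl_refl; auto | simpl; rewrite Rminus_eq_0, Rabs_R0; auto].
- intros d d' [x t] [y u] H [H1 H2]; split; [eapply cl_mono; eauto | simpl in *; lra].
- intros d d' [x t] [y u] [z w] [H1 H2] [H3 H4]; split; [eapply cl_tri; eauto|].
  simpl in *. replace (t - w) with ((t - u) + (u - w)) by ring.
  eapply Rle_lt_trans; [apply Rabs_triang| lra].
Defined.

Definition UC (X : CS) (f : X -> R) := forall e, 0 < e -> exists d, 0 < d /\
  forall x y, cl d x y -> Rabs (f x - f y) < e.
Definition BD {X : Type} (f : X -> R) := exists M, forall x, Rabs (f x) <= M.
Definition BUC (X : CS) (f : X -> R) := UC X f /\ BD f.

Definition UCR (f : R -> R) := forall e, 0 < e -> exists d, 0 < d /\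
  forall x y, Rabs (x - y) < d -> Rabs (f x - f y) < e.

Lemma BD_nonneg {X} (f : X -> R) (x : X) M : (forall x, Rabs (f x) <= M) -> 0 <= M.
Proof. intros H; specialize (H x); pose proof (Rabs_pos (f x)); lra. Qed.

Lemma BUC_ext (X : CS) f g : BUC X f -> (forall x, f x = g x) -> BUC X g.
Proof.
  intros H E. replace g with f; auto. apply functional_extensionality; auto.
Qed.

Lemma BUC_const (X : CS) c : BUC X (fun _ => c).
Proof.
  split. intros e He; exists 1; split; [lra|]; intros; rewrite Rminus_eq_0, Rabs_R0; auto.
  exists (Rabs c); intros; lra.
Qed.

Lemma BUC_plus (X : CS) f g : BUC X f -> BUC X g -> BUC X (fun x => f x + g x).
Proof.
  intros [Uf [Mf Hf]] [Ug [Mg Hg]]; split.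
  - intros e He. destruct (Uf (e/2)) as [d1 [Hd1 H1]]; [lra|].
    destruct (Ug (e/2)) as [d2 [Hd2 H2]]; [lra|].
    exists (Rmin d1 d2); split; [apply Rmin_pos; auto|]. intros x y Hxy.
    assert (A1 := H1 x y (cl_mono _ _ _ x y (Rmin_l _ _) Hxy)).
    assert (A2 := H2 x y (cl_mono _ _ _ x y (Rmin_r _ _) Hxy)).
    replace (f x + g x - (f y + g y)) with ((f x - f y) + (g x - g y)) by ring.
    eapply Rle_lt_trans; [apply Rabs_triang| lra].
  - exists (Mf + Mg); intros x; eapply Rle_trans; [apply Rabs_triang|].
    specialize (Hf x); specialize (Hg x); lra.
Qed.

Lemma BUC_scal (X : CS) c f : BUC X f -> BUC X (fun x => c * f x).
Proof.
  intros [Uf [Mf Hf]]; split.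
  - intros e He. destruct (Uf (e / (Rabs c + 1))) as [d [Hd H]].
    { apply Rdiv_lt_0_compat; auto. pose proof (Rabs_pos c); lra. }
    exists d; split; auto; intros x y Hxy.
    replace (c * f x - c * f y) with (c * (f x - f y)) by ring.
    rewrite Rabs_mult. specialize (H x y Hxy). pose proof (Rabs_pos c).
    pose proof (Rabs_pos (f x - f y)).
    apply Rle_lt_trans with ((Rabs c + 1) * Rabs (f x - f y)). nra.
    replace e with ((Rabs c + 1) * (e / (Rabs c + 1))) by (field; lra).
    apply Rmult_lt_compat_l; lra.
  - exists (Rabs c * Mf); intros x; rewrite Rabs_mult.
    apply Rmult_le_compat_l; auto; apply Rabs_pos.
Qed.

Lemma BUC_opp (X : CS) f : BUC X f -> BUC X (fun x => - f x).
Proof. intros H. apply BUC_ext with (fun x => -1 * f x); [apply BUC_scal; auto| intros; ring]. Qed.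

Lemma BUC_minus (X : CS) f g : BUC X f -> BUC X g -> BUC X (fun x => f x - g x).
Proof. intros. apply BUC_ext with (fun x => f x + - g x); [apply BUC_plus; auto; apply BUC_opp; auto| intros; ring]. Qed.

Lemma BUC_mult (X : CS) f g : BUC X f -> BUC X g -> BUC X (fun x => f x * g x).
Proof.
  intros [Uf [Mf Hf]] [Ug [Mg Hg]]; split.
  - intros e He. pose (K := Rabs Mf + Rabs Mg + 1).
    assert (HK : 0 < K) by (unfold K; pose proof (Rabs_pos Mf); pose proof (Rabs_pos Mg); lra).
    destruct (Uf (e/(2*K))) as [d1 [Hd1 H1]]; [apply Rdiv_lt_0_compat; lra|].
    destruct (Ug (e/(2*K))) as [d2 [Hd2 H2]]; [apply Rdiv_lt_0_compat; lra|].
    exists (Rmin d1 d2); split; [apply Rmin_pos; auto|]. intros x y Hxy.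
    assert (A1 := H1 x y (cl_mono _ _ _ x y (Rmin_l _ _) Hxy)).
    assert (A2 := H2 x y (cl_mono _ _ _ x y (Rmin_r _ _) Hxy)).
    replace (f x * g x - f y * g y) with (f x * (g x - g y) + g y * (f x - f y)) by ring.
    eapply Rle_lt_trans; [apply Rabs_triang|]. rewrite !Rabs_mult.
    assert (B1 : Rabs (f x) <= K) by (specialize (Hf x); unfold K; pose proof (Rle_abs Mf); pose proof (Rabs_pos Mg); lra).
    assert (B2 : Rabs (g y) <= K) by (specialize (Hg y); unfold K; pose proof (Rle_abs Mg); pose proof (Rabs_pos Mf); lra).
    pose proof (Rabs_pos (f x)); pose proof (Rabs_pos (g y)).
    pose proof (Rabs_pos (g x - g y)); pose proof (Rabs_pos (f x - f y)).
    apply Rle_lt_trans with (K * Rabs (g x - g y) + K * Rabs (f x - f y)). nra.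
    replace e with (K * (e / (2 * K)) + K * (e / (2 * K))) by (field; lra). nra.
  - exists (Mf * Mg); intros x; rewrite Rabs_mult.
    apply Rmult_le_compat; auto; apply Rabs_pos.
Qed.

Definition UCmap (X Y : CS) (h : X -> Y) := forall d, 0 < d -> exists d', 0 < d' /\
  forall x y, cl d' x y -> cl d (h x) (h y).

Lemma BUC_comp (X Y : CS) (h : X -> Y) f : UCmap X Y h -> BUC Y f -> BUC X (fun x => f (h x)).
Proof.
  intros Hh [Uf [M HM]]; split; [|exists M; auto].
  intros e He. destruct (Uf e He) as [d [Hd H]]. destruct (Hh d Hd) as [d' [Hd' H']].
  exists d'; split; auto.
Qed.

Definition UCv (X : CS) (h : X -> R) := forall d, 0 < d -> exists d', 0 < d' /\
  forall x y, cl d' x y -> Rabs (h x - h y) < d.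

Lemma BUC_compR (X : CS) (h : X -> R) (g : R -> R) :
  UCv X h -> UCR g -> BD g -> BUC X (fun x => g (h x)).
Proof.
  intros Hh Ug [M HM]; split; [|exists M; auto].
  intros e He. destruct (Ug e He) as [d [Hd H]]. destruct (Hh d Hd) as [d' [Hd' H']].
  exists d'; split; auto.
Qed.

Lemma UCv_snd (X : CS) : UCv (CSP X) snd.
Proof. intros d Hd; exists d; split; auto; intros x y [_ H]; auto. Qed.

Lemma UCv_fst (X : CS) (h : X -> R) : UCv X h -> UCv (CSP X) (fun p => h (fst p)).
Proof. intros H d Hd; destruct (H d Hd) as [d' [Hd' H']]; exists d'; split; auto; intros x y [A _]; auto. Qed.

Lemma UCv_lin (X : CS) (h : X -> R) c k : UCv X h -> UCv X (fun x => c * h x + k).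
Proof.
  intros H d Hd. destruct (H (d / (Rabs c + 1))) as [d' [Hd' H']].
  { apply Rdiv_lt_0_compat; auto; pose proof (Rabs_pos c); lra. }
  exists d'; split; auto; intros x y Hxy.
  replace (c * h x + k - (c * h y + k)) with (c * (h x - h y)) by ring.
  rewrite Rabs_mult. specialize (H' x y Hxy). pose proof (Rabs_pos c). pose proof (Rabs_pos (h x - h y)).
  apply Rle_lt_trans with ((Rabs c + 1) * Rabs (h x - h y)). nra.
  replace d with ((Rabs c + 1) * (d / (Rabs c + 1))) by (field; lra).
  apply Rmult_lt_compat_l; lra.
Qed.

Lemma UCv_scal (X : CS) (h : X -> R) c : UCv X h -> UCv X (fun x => c * h x).
Proof.
  intros H d Hd. destruct (UCv_lin X h c 0 H d Hd) as [d' [Hd' H']]. exists d'; split; auto.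
  intros x y Hxy. specialize (H' x y Hxy). replace (c * h x - c * h y) with (c * h x + 0 - (c * h y + 0)) by ring. auto.
Qed.

Lemma UCv_plus (X : CS) (h g : X -> R) : UCv X h -> UCv X g -> UCv X (fun x => h x + g x).
Proof.
  intros H G d Hd. destruct (H (d/2)) as [d1 [H1 H1']]; [lra|]. destruct (G (d/2)) as [d2 [H2 H2']]; [lra|].
  exists (Rmin d1 d2); split; [apply Rmin_pos; auto|]. intros x y Hxy.
  assert (A1 := H1' x y (cl_mono _ _ _ x y (Rmin_l _ _) Hxy)).
  assert (A2 := H2' x y (cl_mono _ _ _ x y (Rmin_r _ _) Hxy)).
  replace (h x + g x - (h y + g y)) with ((h x - h y) + (g x - g y)) by ring.
  eapply Rle_lt_trans; [apply Rabs_triang| lra].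
Qed.

Lemma UCR_cos : UCR cos.
Proof.
  intros e He; exists e; split; auto; intros x y H.
  eapply Rle_lt_trans; [|apply H].
  destruct (MVT_gen cos x y (fun t => - sin t)) as [c [_ Hc]].
  - intros t _. apply is_derive_Reals. apply derivable_pt_lim_cos.
  - intros t _. apply continuity_cos.
  - rewrite Rabs_minus_sym, Hc, Rabs_mult, (Rabs_minus_sym y x). pose proof (SIN_bound c).
    rewrite <- (Rmult_1_l (Rabs (x - y))) at 2. apply Rmult_le_compat_r; [apply Rabs_pos|].
    apply Rabs_le; lra.
Qed.

Lemma BD_cos : BD cos.
Proof. exists 1; intros x; apply Rabs_le; apply COS_bound. Qed.

Lemma UCR_const c : UCR (fun _ => c).
Proof. intros e He; exists 1; split; [lra|]; intros; rewrite Rminus_eq_0, Rabs_R0; auto. Qed.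

Lemma BD_const c : BD (fun _ : R => c).
Proof. exists (Rabs c); intros; lra. Qed.

Lemma UCR_continuous f : UCR f -> forall x, continuous f x.
Proof.
  intros H x. apply continuity_pt_filterlim.
  intros e He. destruct (H e He) as [d [Hd Hd']]. exists d; split; auto.
  intros y [_ Hy]. unfold R_dist in *. apply Hd'. auto.
Qed.

Definition pint {X : CS} (a b : R) (F : CSP X -> R) : X -> R :=
  fun x => RInt (fun t => F (x, t)) a b.

Lemma UC_slice (X : CS) (F : CSP X -> R) x : UC (CSP X) F -> UCR (fun t => F (x, t)).
Proof.
  intros H e He. destruct (H e He) as [d [Hd H']]. exists d; split; auto.
  intros t u Htu. apply H'. split; simpl; auto. apply cl_refl; auto.
Qed.

Lemma pint_ex (X : CS) a b (F : CSP X -> R) x : BUC (CSP X) F -> ex_RInt (fun t => F (x, t)) a b.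
Proof.
  intros [U _]. apply (ex_RInt_continuous (V := R_CompleteNormedModule)). intros z _. apply UCR_continuous. apply UC_slice; auto.
Qed.

Lemma RInt_plusR f g a b : ex_RInt f a b -> ex_RInt g a b ->
  RInt (fun t => f t + g t) a b = RInt f a b + RInt g a b.
Proof. intros. apply (RInt_plus (V := R_CompleteNormedModule)); auto. Qed.
Lemma RInt_scalR f a b c : ex_RInt f a b ->
  RInt (fun t => c * f t) a b = c * RInt f a b.
Proof. intros. apply (RInt_scal (V := R_CompleteNormedModule)); auto. Qed.
Lemma RInt_minusR f g a b : ex_RInt f a b -> ex_RInt g a b ->
  RInt (fun t => f t - g t) a b = RInt f a b - RInt g a b.
Proof. intros. apply (RInt_minus (V := R_CompleteNormedModule)); auto. Qed.
Lemma ex_RInt_minusR f g a b : ex_RInt f a b -> ex_RInt g a b -> ex_RInt (fun t => f t - g t) a b.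
Proof. intros. apply (ex_RInt_minus (V := R_NormedModule)); auto. Qed.

Lemma RInt_ext_pw (f g : R -> R) a b : (forall x, f x = g x) -> RInt f a b = RInt g a b.
Proof. intros H. apply RInt_ext. intros; apply H. Qed.

Lemma pint_BUC (X : CS) a b (F : CSP X -> R) : a <= b -> BUC (CSP X) F -> BUC X (pint a b F).
Proof.
  intros Hab HF. pose proof HF as HF'. destruct HF' as [U [M HM]]. split.
  - intros e He. destruct (U (e / (b - a + 1))) as [d [Hd H]].
    { apply Rdiv_lt_0_compat; lra. }
    exists d; split; auto. intros x y Hxy. unfold pint.
    rewrite <- RInt_minusR by (apply pint_ex; auto).
    eapply Rle_lt_trans.
    apply (abs_RInt_le_const _ a b (e / (b - a + 1))); auto.
    + apply ex_RInt_minusR; apply pint_ex; auto.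
    + intros t _. left. apply H. split; simpl; auto. rewrite Rminus_eq_0, Rabs_R0; auto.
    + assert (0 < e / (b - a + 1)) by (apply Rdiv_lt_0_compat; lra).
      apply Rlt_le_trans with ((b - a + 1) * (e / (b - a + 1))).
      apply Rmult_lt_compat_r; [auto| lra].
      apply Req_le; field; lra.
  - exists ((b - a) * M). intros x. unfold pint. apply abs_RInt_le_const; auto.
    apply pint_ex; auto.
Qed.

Lemma pint_plus (X : CS) a b (F G : CSP X -> R) x : BUC (CSP X) F -> BUC (CSP X) G ->
  pint a b (fun p => F p + G p) x = pint a b F x + pint a b G x.
Proof. intros; unfold pint. apply RInt_plusR; apply pint_ex; auto. Qed.

Lemma pint_scal (X : CS) a b c (F : CSP X -> R) x : BUC (CSP X) F ->
  pint a b (fun p => c * F p) x = c * pint a b F x.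
Proof. intros; unfold pint. apply RInt_scalR; apply pint_ex; auto. Qed.

Lemma pint_minus (X : CS) a b (F G : CSP X -> R) x : BUC (CSP X) F -> BUC (CSP X) G ->
  pint a b (fun p => F p - G p) x = pint a b F x - pint a b G x.
Proof. intros; unfold pint. apply RInt_minusR; apply pint_ex; auto. Qed.

Lemma pint_close (X : CS) a b (F G : CSP X -> R) c : a <= b -> BUC (CSP X) F -> BUC (CSP X) G ->
  (forall p, Rabs (F p - G p) <= c) -> forall x, Rabs (pint a b F x - pint a b G x) <= (b - a) * c.
Proof.
  intros Hab HF HG H x. rewrite <- pint_minus by auto. unfold pint.
  apply abs_RInt_le_const; auto. apply (pint_ex _ _ _ (fun p => F p - G p)). apply BUC_minus; auto.
Qed.

Lemma pint01_const (X : CS) (F : CSP X -> R) x c : (forall t, F (x, t) = c) -> pint 0 1 F x = c.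
Proof.
  intros H. unfold pint. rewrite (RInt_ext _ (fun _ => c)) by auto.
  rewrite RInt_const. unfold scal; simpl. unfold mult; simpl. ring.
Qed.

Lemma pint_zero (X : CS) a b (F : CSP X -> R) x : (forall t, F (x, t) = 0) -> pint a b F x = 0.
Proof.
  intros H. unfold pint. rewrite (RInt_ext _ (fun _ => 0)) by auto.
  rewrite RInt_const. unfold scal; simpl. unfold mult; simpl. ring.
Qed.

Lemma pint_le (X : CS) a b (F G : CSP X -> R) x : a <= b -> BUC (CSP X) F -> BUC (CSP X) G ->
  (forall t, F (x, t) <= G (x, t)) -> pint a b F x <= pint a b G x.
Proof. intros. unfold pint. apply RInt_le; auto; apply pint_ex; auto. Qed.

(* R^k as iterated products; T5 holds the points (s2, s1, y1, y2, y3). *)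
Definition T1 := CSP CSU.
Definition T2 := CSP T1.
Definition T3 := CSP T2.
Definition T4 := CSP T3.
Definition T5 := CSP T4.

Definition mk5 (s2 s1 y1 y2 y3 : R) : T5 := (((((tt, s2), s1), y1), y2), y3).
Definition gs2 (p : T5) : R := snd (fst (fst (fst (fst p)))).
Definition gs1 (p : T5) : R := snd (fst (fst (fst p))).
Definition gy1 (p : T5) : R := snd (fst (fst p)).
Definition gy2 (p : T5) : R := snd (fst p).
Definition gy3 (p : T5) : R := snd p.

Lemma mk5_eta (p : T5) : p = mk5 (gs2 p) (gs1 p) (gy1 p) (gy2 p) (gy3 p).
Proof. destruct p as [[[[[[] ?] ?] ?] ?] ?]; reflexivity. Qed.

Lemma cl5 d (p q : T5) : cl d p q <->
  Rabs (gs2 p - gs2 q) < d /\ Rabs (gs1 p - gs1 q) < d /\ Rabs (gy1 p - gy1 q) < d /\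
  Rabs (gy2 p - gy2 q) < d /\ Rabs (gy3 p - gy3 q) < d.
Proof.
  destruct p as [[[[[[] ?] ?] ?] ?] ?]; destruct q as [[[[[[] ?] ?] ?] ?] ?].
  simpl. unfold gs2, gs1, gy1, gy2, gy3; simpl. tauto.
Qed.

Lemma UCv_gs2 : UCv T5 gs2.
Proof. apply (UCv_fst T4 (fun p => snd (fst (fst (fst p))))). apply (UCv_fst T3 (fun p => snd (fst (fst p)))).
  apply (UCv_fst T2 (fun p => snd (fst p))). apply (UCv_fst T1 snd). apply UCv_snd. Qed.

Lemma UCv_gs1 : UCv T5 gs1.
Proof. apply (UCv_fst T4 (fun p => snd (fst (fst p)))). apply (UCv_fst T3 (fun p => snd (fst p))).
  apply (UCv_fst T2 snd). apply UCv_snd. Qed.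

Lemma UCv_gy3 : UCv T5 gy3.
Proof. apply UCv_snd. Qed.

Lemma UCv_gy2 : UCv T5 gy2.
Proof. apply (UCv_fst T4 snd). apply UCv_snd. Qed.

Lemma UCv_gy1 : UCv T5 gy1.
Proof. apply (UCv_fst T4 (fun p => snd (fst p))). apply (UCv_fst T3 snd). apply UCv_snd. Qed.

Lemma pint_plus_f (X : CS) a b (F G : CSP X -> R) : BUC (CSP X) F -> BUC (CSP X) G ->
  pint a b (fun p => F p + G p) = (fun x => pint a b F x + pint a b G x).
Proof. intros; apply functional_extensionality; intros; apply pint_plus; auto. Qed.
Lemma pint_scal_f (X : CS) a b c (F : CSP X -> R) : BUC (CSP X) F ->
  pint a b (fun p => c * F p) = (fun x => c * pint a b F x).
Proof. intros; apply functional_extensionality; intros; apply pint_scal; auto. Qed.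

(* Compactness in a form that avoids open covers: every property of subsets
   that is hereditary, stable under finite unions, and holds on some
   neighbourhood of each point of K, holds on K. *)
Definition qcompact (X : CS) (K : X -> Prop) := forall Q : (X -> Prop) -> Prop,
  (forall A B : X -> Prop, (forall x, A x -> B x) -> Q B -> Q A) ->
  (forall A B, Q A -> Q B -> Q (fun x => A x \/ B x)) ->
  (forall x, K x -> exists d, 0 < d /\ Q (fun y => cl d x y)) -> Q K.

Lemma qc_unit : qcompact CSU (fun _ => True).
Proof.
  intros Q Hm Hu Hl. destruct (Hl tt I) as [d [Hd HQ]]. eapply Hm; [|apply HQ]. simpl; auto.
Qed.

(* [a,b] is compact in the sense of [qcompact]: consider the supremum of the t
   such that [a,t] has the property. *)
Lemma qc_interval (Q : (R -> Prop) -> Prop) a b : a <= b ->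
  (forall A B : R -> Prop, (forall x, A x -> B x) -> Q B -> Q A) ->
  (forall A B, Q A -> Q B -> Q (fun x => A x \/ B x)) ->
  (forall x, a <= x <= b -> exists d, 0 < d /\ Q (fun y => Rabs (x - y) < d)) ->
  Q (fun y => a <= y <= b).
Proof.
  intros Hab Hm Hu Hl.
  pose (S := fun t => a <= t <= b /\ Q (fun y => a <= y <= t)).
  assert (Sa : S a).
  { split; [lra|]. destruct (Hl a (conj (Rle_refl a) Hab)) as [d [Hd HQ]].
    eapply Hm; [|apply HQ]. intros y Hy. replace y with a by lra. rewrite Rminus_eq_0, Rabs_R0; auto. }
  assert (Sb : bound S) by (exists b; intros t [Ht _]; lra).
  destruct (completeness S Sb (ex_intro _ a Sa)) as [c [Hc1 Hc2]].
  assert (Hac : a <= c) by (apply Hc1; auto).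
  assert (Hcb : c <= b) by (apply Hc2; intros t [Ht _]; lra).
  destruct (Hl c (conj Hac Hcb)) as [d [Hd HQ]].
  assert (Ht : exists t, S t /\ c - d < t).
  { apply NNPP; intros N. assert (c <= c - d); [|lra].
    apply Hc2. intros t St. apply Rnot_lt_le. intros Hlt. apply N; exists t; auto. }
  destruct Ht as [t [[Ht1 Ht2] Ht3]].
  pose (c' := Rmin b (c + d / 2)).
  assert (Qc' : Q (fun y => a <= y <= c')).
  { eapply Hm; [|apply (Hu _ _ Ht2 HQ)]. intros y Hy.
    destruct (Rle_dec y t); [left; lra| right].
    assert (y <= c + d/2) by (pose proof (Rmin_r b (c + d/2)); unfold c' in Hy; lra).
    apply Rabs_lt_between'; lra. }
  assert (Sc' : S c').
  { split; auto. unfold c'. split; [apply Rmin_glb; lra| apply Rmin_l]. }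
  assert (c' <= c) by (apply Hc1; auto).
  unfold c' in *. unfold Rmin in *. destruct (Rle_dec b (c + d/2)); auto. lra.
Qed.

Lemma qc_prod (X : CS) K a b : a <= b -> qcompact X K ->
  qcompact (CSP X) (fun p => K (fst p) /\ a <= snd p <= b).
Proof.
  intros Hab HK Q Hm Hu Hl.
  pose (Q2 := fun B : X -> Prop => Q (fun p => B (fst p) /\ a <= snd p <= b)).
  apply (HK Q2).
  - intros A B HAB HB. eapply Hm; [|apply HB]. simpl. intros [x t] [H1 H2]; auto.
  - intros A B HA HB. eapply Hm; [|apply (Hu _ _ HA HB)]. intros [x t] [[H1|H1] H2]; simpl in *; auto.
  - intros x Kx.
    pose (Q1 := fun A : R -> Prop => exists d, 0 < d /\ Q (fun p => cl d x (fst p) /\ A (snd p))).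
    assert (HQ1 : Q1 (fun y => a <= y <= b)).
    { apply qc_interval; auto.
      - intros A B HAB [d [Hd HB]]. exists d; split; auto. eapply Hm; [|apply HB]. intros [y t] [H1 H2]; simpl in *; auto.
      - intros A B [d1 [Hd1 HA]] [d2 [Hd2 HB]]. exists (Rmin d1 d2); split; [apply Rmin_pos; auto|].
        eapply Hm; [|apply (Hu _ _ HA HB)]. intros [y t] [H1 [H2|H2]]; simpl in *.
        + left; split; auto. eapply cl_mono; [|apply H1]. apply Rmin_l.
        + right; split; auto. eapply cl_mono; [|apply H1]. apply Rmin_r.
      - intros t Ht. destruct (Hl (x, t) (conj Kx Ht)) as [d [Hd HQ]].
        exists d; split; auto. exists d; split; auto. }
    destruct HQ1 as [d [Hd HQ]]. exists d; split; auto.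
Qed.

Lemma qc_UC (X : CS) (K : X -> Prop) (f : X -> R) : qcompact X K ->
  (forall x, K x -> forall e, 0 < e -> exists d, 0 < d /\ forall y, cl d x y -> Rabs (f y - f x) < e) ->
  forall e, 0 < e -> exists d, 0 < d /\ forall x, K x -> forall y, cl d x y -> Rabs (f x - f y) < e.
Proof.
  intros HK Hc e He.
  pose (Q := fun A : X -> Prop => exists d, 0 < d /\ forall x, A x -> forall y, cl d x y -> Rabs (f x - f y) < e).
  apply (HK Q).
  - intros A B HAB [d [Hd H]]; exists d; split; auto.
  - intros A B [d1 [Hd1 HA]] [d2 [Hd2 HB]]. exists (Rmin d1 d2); split; [apply Rmin_pos; auto|].
    intros x [Hx|Hx] y Hy.
    + apply HA; auto. eapply cl_mono; [|apply Hy]. apply Rmin_l.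
    + apply HB; auto. eapply cl_mono; [|apply Hy]. apply Rmin_r.
  - intros x0 Kx0. destruct (Hc x0 Kx0 (e/2)) as [d0 [Hd0 H0]]; [lra|].
    exists (d0/2); split; [lra|]. exists (d0/2); split; [lra|].
    intros x Hx y Hy.
    assert (A1 : Rabs (f x - f x0) < e/2) by (apply H0; eapply cl_mono; [|apply Hx]; lra).
    assert (A2 : Rabs (f y - f x0) < e/2).
    { apply H0. replace d0 with (d0/2 + d0/2) by field. eapply cl_tri; eauto. }
    replace (f x - f y) with ((f x - f x0) - (f y - f x0)) by ring.
    eapply Rle_lt_trans; [apply Rabs_triang|]. rewrite Rabs_Ropp. lra.
Qed.

Lemma qc_bounded (X : CS) K (f : X -> R) : qcompact X K ->
  (forall x, K x -> forall e, 0 < e -> exists d, 0 < d /\ forall y, cl d x y -> Rabs (f y - f x) < e) ->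
  exists M, forall x, K x -> Rabs (f x) <= M.
Proof.
  intros HK Hc. apply (HK (fun A => exists M, forall x, A x -> Rabs (f x) <= M)).
  - intros A B HAB [M HM]. exists M; auto.
  - intros A B [M1 H1] [M2 H2]. exists (Rmax M1 M2). intros x [Hx|Hx].
    + eapply Rle_trans; [apply H1; auto| apply Rmax_l].
    + eapply Rle_trans; [apply H2; auto| apply Rmax_r].
  - intros x Kx. destruct (Hc x Kx 1 Rlt_0_1) as [d [Hd H]]. exists d; split; auto.
    exists (Rabs (f x) + 1). intros y Hy. specialize (H y Hy).
    replace (f y) with ((f y - f x) + f x) by ring. eapply Rle_trans; [apply Rabs_triang| lra].
Qed.

Definition clamp (a b x : R) := Rmax a (Rmin b x).

Lemma clamp_in a b x : a <= b -> a <= clamp a b x <= b.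
Proof. intros; unfold clamp, Rmax, Rmin; repeat destruct Rle_dec; lra. Qed.
Lemma clamp_id a b x : a <= x <= b -> clamp a b x = x.
Proof. intros; unfold clamp, Rmax, Rmin; repeat destruct Rle_dec; lra. Qed.
Lemma clamp_lip a b x y : a <= b -> Rabs (clamp a b x - clamp a b y) <= Rabs (x - y).
Proof.
  intros; unfold clamp, Rmax, Rmin; repeat destruct Rle_dec; unfold Rabs; repeat destruct Rcase_abs; lra.
Qed.

Fixpoint sumn (f : nat -> R) (n : nat) : R :=
  match n with O => 0 | S n => sumn f n + f n end.

Lemma sumn_le f g n : (forall k, (k < n)%nat -> f k <= g k) -> sumn f n <= sumn g n.
Proof. induction n; simpl; intros H; [lra|]. assert (f n <= g n) by (apply H; lia).
  assert (sumn f n <= sumn g n) by (apply IHn; intros; apply H; lia). lra. Qed.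
Lemma sumn_plus f g n : sumn (fun k => f k + g k) n = sumn f n + sumn g n.
Proof. induction n; simpl; lra. Qed.
Lemma sumn_scal c f n : sumn (fun k => c * f k) n = c * sumn f n.
Proof. induction n; simpl; [ring|rewrite IHn; ring]. Qed.
Lemma sumn_const c n : sumn (fun _ => c) n = INR n * c.
Proof. induction n; simpl sumn; [simpl; ring|rewrite IHn, S_INR; ring]. Qed.
Lemma sumn_abs f n : Rabs (sumn f n) <= sumn (fun k => Rabs (f k)) n.
Proof. induction n; simpl; [rewrite Rabs_R0; lra|]. eapply Rle_trans; [apply Rabs_triang|lra]. Qed.

Fixpoint lsum (l : list (R * R)) (F : R * R -> R) : R :=
  match l with nil => 0 | p :: l => F p + lsum l F end.

Lemma lsum_le l F G : (forall p, In p l -> F p <= G p) -> lsum l F <= lsum l G.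
Proof. induction l; simpl; intros H; [lra|]. assert (F a <= G a) by auto.
  assert (lsum l F <= lsum l G) by auto. lra. Qed.
Lemma sumn_lsum l F n : sumn (fun k => lsum l (F k)) n = lsum l (fun p => sumn (fun k => F k p) n).
Proof.
  induction n; simpl.
  - induction l; simpl; auto; lra.
  - rewrite IHn. clear IHn. induction l; simpl; [lra|]. rewrite <- IHl. ring.
Qed.
Lemma total_length_lsum l : total_length l = lsum l (fun p => snd p - fst p).
Proof. induction l; simpl; auto. rewrite IHl; auto. Qed.
Lemma lsum_const l c : lsum l (fun _ => c) = INR (length l) * c.
Proof. induction l; simpl length; simpl lsum; [simpl; ring|rewrite IHl, S_INR; ring]. Qed.
Lemma lsum_plus l F G : lsum l (fun p => F p + G p) = lsum l F + lsum l G.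
Proof. induction l; simpl; lra. Qed.

Lemma lsum_nonneg l F : (forall x, In x l -> 0 <= F x) -> 0 <= lsum l F.
Proof. induction l; simpl; intros H; [lra|]. pose proof (H a (or_introl eq_refl)). assert (0 <= lsum l F) by auto. lra. Qed.

Lemma lsum_in_le l F pr : In pr l -> (forall x, In x l -> 0 <= F x) -> F pr <= lsum l F.
Proof.
  induction l; simpl; [tauto|]. intros [E|H] HF.
  - subst. assert (0 <= lsum l F) by (apply lsum_nonneg; auto). lra.
  - pose proof (HF a (or_introl eq_refl)). assert (F pr <= lsum l F) by (apply IHl; auto). lra.
Qed.

Definition ind (c d x h : R) : R := if Rle_dec c x then if Rle_dec x d then h else 0 else 0.

Lemma ind_nonneg c d x h : 0 <= h -> 0 <= ind c d x h.
Proof. intros; unfold ind; repeat destruct Rle_dec; lra. Qed.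

(* The grid points a + k h (k < n) falling in [c,d] carry total weight at most
   d - c + h ([count_grid_le]); [count_grid] is the form proved by induction. *)
Lemma count_grid a h c d n : 0 < h ->
  sumn (fun k => ind c d (a + INR k * h) h) n <= Rmax 0 (Rmin d (a + INR n * h - h) - c + h).
Proof.
  intros Hh. induction n.
  - simpl. apply Rmax_l.
  - simpl sumn. rewrite S_INR. unfold ind at 2.
    destruct (Rle_dec c (a + INR n * h)) as [H1|H1]; [destruct (Rle_dec (a + INR n * h) d) as [H2|H2]|].
    + eapply Rle_trans; [apply Rplus_le_compat_r; apply IHn|].
      unfold Rmax, Rmin; repeat destruct Rle_dec; lra.
    + eapply Rle_trans; [apply Rplus_le_compat_r; apply IHn|].
      unfold Rmax, Rmin; repeat destruct Rle_dec; lra.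
    + eapply Rle_trans; [apply Rplus_le_compat_r; apply IHn|].
      unfold Rmax, Rmin; repeat destruct Rle_dec; lra.
Qed.

Lemma count_grid_le a h c d n : 0 < h -> c <= d ->
  sumn (fun k => ind c d (a + INR k * h) h) n <= d - c + h.
Proof.
  intros Hh Hcd. eapply Rle_trans; [apply count_grid; auto|].
  unfold Rmax, Rmin; repeat destruct Rle_dec; lra.
Qed.

Definition contR (f : R -> R) (x : R) := @continuous R_UniformSpace R_UniformSpace f x.

Lemma cont_pt_to f x : continuity_pt f x -> contR f x.
Proof. apply continuity_pt_filterlim. Qed.
Lemma cont_to_pt f x : contR f x -> continuity_pt f x.
Proof. apply continuity_pt_filterlim. Qed.

Lemma cont_mult f g x : contR f x -> contR g x -> contR (fun t => f t * g t) x.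
Proof. intros. apply (continuous_mult (K := R_AbsRing)); auto. Qed.
Lemma cont_plus f g x : contR f x -> contR g x -> contR (fun t => f t + g t) x.
Proof. intros. apply (continuous_plus (V := R_NormedModule)); auto. Qed.
Lemma cont_const c (x : R) : contR (fun _ : R => c) x.
Proof. apply continuous_const. Qed.
Lemma cont_cos_comp f x : contR f x -> contR (fun t => cos (f t)) x.
Proof. intros. apply continuous_comp; auto. apply cont_pt_to. apply continuity_cos. Qed.
Lemma cont_sin_comp f x : contR f x -> contR (fun t => sin (f t)) x.
Proof. intros. apply continuous_comp; auto. apply cont_pt_to. apply continuity_sin. Qed.

Lemma ex_RInt_cont f a b : (forall x, contR f x) -> ex_RInt f a b.
Proof. intros H. apply (ex_RInt_continuous (V := R_CompleteNormedModule)). intros; apply H. Qed.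

Section Oscillation.
Variables (a b : R) (C u v : R -> R) (eps th : R).
Hypothesis HCc : forall t, contR C t.
Hypothesis Huc : forall t, contR u t.
Hypothesis Hud : forall t, a < t < b -> is_derive u t (v t).
Hypothesis Hvc : forall t, contR v t.
Hypothesis Heps : 0 < eps.

Definition osc_phase t := 2 * PI * u t / eps + th.

Lemma osc_phase_cont t : contR osc_phase t.
Proof.
  unfold osc_phase. apply cont_plus; [|apply cont_const].
  apply (cont_mult (fun t => 2 * PI * u t) (fun _ => / eps)); [|apply cont_const].
  apply (cont_mult (fun _ => 2 * PI) u); auto. apply cont_const.
Qed.

Lemma osc_integrand_cont t : contR (fun t => C t * cos (osc_phase t)) t.
Proof. apply cont_mult; auto. apply cont_cos_comp, osc_phase_cont. Qed.
Lemma osc_deriv_integrand_cont t : contR (fun t => v t * cos (osc_phase t)) t.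
Proof. apply cont_mult; auto. apply cont_cos_comp, osc_phase_cont. Qed.

Lemma ftc_piece p q : a <= p -> p <= q -> q <= b ->
  RInt (fun t => v t * cos (osc_phase t)) p q = eps / (2 * PI) * (sin (osc_phase q) - sin (osc_phase p)).
Proof.
  intros H1 H2 H3.
  set (g := fun t => v t * cos (osc_phase t)).
  set (Phi := fun x => eps / (2 * PI) * sin (osc_phase x) - RInt g p x).
  assert (Hg : forall x y, ex_RInt g x y) by (intros; apply ex_RInt_cont; intros; apply osc_deriv_integrand_cont).
  assert (HdI : forall x, is_derive (RInt g p) x (g x)).
  { intros x. apply (is_derive_RInt (V := R_NormedModule) g (RInt g p) p x).
    - apply filter_forall. intros y. apply (RInt_correct (V := R_CompleteNormedModule)). auto.
    - apply osc_deriv_integrand_cont. }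
  destruct (MVT_gen Phi p q (fun _ => 0)) as [c [_ Hc]].
  - intros x Hx. rewrite Rmin_left, Rmax_right in Hx by lra.
    assert (Hux : is_derive u x (v x)) by (apply Hud; lra).
    unfold Phi.
    assert (D1 : is_derive (fun x => eps / (2 * PI) * sin (osc_phase x)) x (g x)).
    { unfold osc_phase. pose proof PI_RGT_0. auto_derive.
      - exists (v x); auto.
      - replace (Derive (fun x0 => u x0) x) with (v x) by (symmetry; apply is_derive_unique; auto). unfold g, osc_phase. unfold Rdiv. field. split; lra. }
    pose proof (is_derive_minus _ _ _ _ _ D1 (HdI x)) as D.
    assert (D' : is_derive Phi x (minus (g x) (g x))) by exact D.
    unfold minus, plus, opp in D'; simpl in D'. replace (g x + - g x) with 0 in D' by ring. exact D'.
  - intros x _. unfold Phi. apply cont_to_pt.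
    apply (continuous_minus (V := R_NormedModule)).
    + apply (continuous_scal_r (V := R_NormedModule)) with (k := eps / (2 * PI)).
      apply cont_sin_comp, osc_phase_cont.
    + apply ex_derive_continuous. exists (g x); auto.
  - unfold Phi in Hc. rewrite RInt_point in Hc. simpl in Hc.
    unfold zero in Hc; simpl in Hc. fold g. lra.
Qed.

Lemma osc_deriv_piece_bound p q : a <= p -> p <= q -> q <= b ->
  Rabs (RInt (fun t => v t * cos (osc_phase t)) p q) <= eps / PI.
Proof.
  intros H1 H2 H3. rewrite ftc_piece by auto. pose proof PI_RGT_0.
  rewrite Rabs_mult, Rabs_pos_eq by (apply Rlt_le, Rdiv_lt_0_compat; lra).
  assert (Hsin : Rabs (sin (osc_phase q) - sin (osc_phase p)) <= 2).
  { eapply Rle_trans; [apply Rabs_triang|]. rewrite Rabs_Ropp.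
    pose proof (SIN_bound (osc_phase q)); pose proof (SIN_bound (osc_phase p)).
    assert (Rabs (sin (osc_phase q)) <= 1) by (apply Rabs_le; lra).
    assert (Rabs (sin (osc_phase p)) <= 1) by (apply Rabs_le; lra). lra. }
  apply Rle_trans with (eps / (2 * PI) * 2).
  - apply Rmult_le_compat_l; auto. left; apply Rdiv_lt_0_compat; lra.
  - right; field; lra.
Qed.

Lemma osc_piece_bound p q Cm : p <= q -> (forall t, Rabs (C t) <= Cm) ->
  Rabs (RInt (fun t => C t * cos (osc_phase t)) p q) <= (q - p) * Cm.
Proof.
  intros Hpq HC. apply abs_RInt_le_const; auto.
  apply ex_RInt_cont; intros; apply osc_integrand_cont.
  intros t _. rewrite Rabs_mult. pose proof (Rabs_pos (C t)).
  assert (Rabs (cos (osc_phase t)) <= 1) by (apply Rabs_le; apply COS_bound).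
  specialize (HC t). nra.
Qed.

(* On a piece [p,q] where |v p| >= dl and C, v vary little, write
   C = (C p / v p) v + (C - (C p / v p) v): the first part gains eps/pi from
   [osc_deriv_piece_bound], the second is small pointwise. *)
Lemma osc_piece_nondeg p q dl ga e1 Cm : a <= p -> p <= q -> q <= b -> 0 < dl -> dl <= Rabs (v p) ->
  (forall t, p <= t <= q -> Rabs (C t - C p) <= e1) ->
  (forall t, p <= t <= q -> Rabs (v t - v p) <= ga * dl) -> 0 <= ga -> Rabs (C p) <= Cm ->
  Rabs (RInt (fun t => C t * cos (osc_phase t)) p q) <= (q - p) * (e1 + Cm * ga) + Cm * eps / (PI * dl).
Proof.
  intros H1 H2 H3 Hdl Hvp HC Hv Hga HCm.
  assert (Hvp0 : v p <> 0) by (intros E; rewrite E, Rabs_R0 in Hvp; lra).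
  set (k := C p / v p).
  assert (Ef : ex_RInt (fun t => C t * cos (osc_phase t)) p q) by (apply ex_RInt_cont; intros; apply osc_integrand_cont).
  assert (Eg : ex_RInt (fun t => v t * cos (osc_phase t)) p q) by (apply ex_RInt_cont; intros; apply osc_deriv_integrand_cont).
  assert (Ekg : ex_RInt (fun t => k * (v t * cos (osc_phase t))) p q)
    by (apply (ex_RInt_scal (V := R_NormedModule)) with (k := k); auto).
  assert (Esplit : RInt (fun t => C t * cos (osc_phase t)) p q =
     RInt (fun t => C t * cos (osc_phase t) - k * (v t * cos (osc_phase t))) p q
     + k * RInt (fun t => v t * cos (osc_phase t)) p q).
  { rewrite RInt_minusR, RInt_scalR by auto.
    unfold Rminus. rewrite Rplus_assoc, Rplus_opp_l, Rplus_0_r. reflexivity. }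
  rewrite Esplit. eapply Rle_trans; [apply Rabs_triang|]. apply Rplus_le_compat.
  - apply abs_RInt_le_const; auto. apply ex_RInt_minusR; auto.
    intros t Ht.
    replace (C t * cos (osc_phase t) - k * (v t * cos (osc_phase t)))
      with (cos (osc_phase t) * ((C t - C p) + (C p - k * v t))) by ring.
    rewrite Rabs_mult. assert (Hc : Rabs (cos (osc_phase t)) <= 1) by (apply Rabs_le; apply COS_bound).
    assert (Hs : Rabs ((C t - C p) + (C p - k * v t)) <= e1 + Cm * ga).
    { eapply Rle_trans; [apply Rabs_triang|]. apply Rplus_le_compat; [apply HC; auto|].
      replace (C p - k * v t) with (C p * ((v p - v t) / v p)) by (unfold k; field; auto).
      rewrite Rabs_mult. apply Rmult_le_compat; try apply Rabs_pos; auto.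
      rewrite Rabs_div, Rabs_minus_sym by auto.
      apply Rmult_le_reg_r with (Rabs (v p)); [apply Rabs_pos_lt; auto|].
      unfold Rdiv; rewrite Rmult_assoc, Rinv_l, Rmult_1_r by (apply Rabs_no_R0; auto).
      eapply Rle_trans; [apply Hv; auto|]. apply Rmult_le_compat_l; auto. }
    pose proof (Rabs_pos ((C t - C p) + (C p - k * v t))). nra.
  - unfold k. rewrite Rabs_mult, Rabs_div by auto. pose proof PI_RGT_0.
    assert (Hk : Rabs (C p) / Rabs (v p) <= Cm / dl).
    { unfold Rdiv. apply Rmult_le_compat; auto. apply Rabs_pos.
      left; apply Rinv_0_lt_compat, Rabs_pos_lt; auto. apply Rinv_le_contravar; auto. }
    apply Rle_trans with (Cm / dl * (eps / PI)); [|right; field; lra].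
    apply Rmult_le_compat; auto using osc_deriv_piece_bound, Rabs_pos.
    apply Rmult_le_pos; [apply Rabs_pos| left; apply Rinv_0_lt_compat, Rabs_pos_lt; auto].
Qed.

Lemma chasles_sum p h n : RInt (fun t => C t * cos (osc_phase t)) p (p + INR n * h) =
  sumn (fun k => RInt (fun t => C t * cos (osc_phase t)) (p + INR k * h) (p + INR (S k) * h)) n.
Proof.
  assert (Ef : forall x y, ex_RInt (fun t => C t * cos (osc_phase t)) x y)
    by (intros; apply ex_RInt_cont; intros; apply osc_integrand_cont).
  induction n.
  - simpl. replace (p + 0 * h) with p by ring. apply (RInt_point (V := R_CompleteNormedModule)).
  - cbn [sumn]. rewrite <- IHn. symmetry. apply (RInt_Chasles (V := R_CompleteNormedModule)); auto.
Qed.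

(* Estimate of one grid piece [p, p+h]: either |v p| >= dl and
   [osc_piece_nondeg] applies, or p lies in one of the intervals of l covering
   the sublevel set {|v| <= dl}, and the piece is charged to that interval. *)
Lemma osc_grid_piece (l : list (R * R)) dl e1 ga Cm h p :
  0 < dl -> 0 <= ga -> 0 <= h -> a <= p -> p + h <= b ->
  (forall t, a <= t <= b -> Rabs (v t) <= dl -> exists pr, In pr l /\ fst pr <= t <= snd pr) ->
  (forall t, Rabs (C t) <= Cm) ->
  (forall x y, Rabs (x - y) <= h -> Rabs (C x - C y) <= e1) ->
  (forall x y, a <= x <= b -> Rabs (x - y) <= h -> Rabs (v x - v y) <= ga * dl) ->
  Rabs (RInt (fun t => C t * cos (osc_phase t)) p (p + h))
    <= h * (e1 + Cm * ga) + Cm * eps / (PI * dl) + Cm * lsum l (fun pr => ind (fst pr) (snd pr) p h).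
Proof.
  intros Hdl Hga Hh Hap Hpb Hcov HCm HCuc Hvuc.
  assert (HCm0 : 0 <= Cm) by (pose proof (HCm a); pose proof (Rabs_pos (C a)); lra).
  assert (He1 : 0 <= e1).
  { pose proof (HCuc a a) as H0. rewrite !Rminus_eq_0, !Rabs_R0 in H0. apply H0. lra. }
  assert (Hrest : 0 <= Cm * eps / (PI * dl))
    by (pose proof PI_RGT_0; apply Rmult_le_pos; [nra| left; apply Rinv_0_lt_compat; nra]).
  assert (Hlsum : 0 <= lsum l (fun pr => ind (fst pr) (snd pr) p h))
    by (apply lsum_nonneg; intros; apply ind_nonneg; lra).
  destruct (Rle_dec dl (Rabs (v p))) as [Hgood|Hbad].
  - eapply Rle_trans.
    + apply (osc_piece_nondeg p (p + h) dl ga e1 Cm); auto; try lra.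
      * intros t Ht. apply HCuc. rewrite Rabs_pos_eq; lra.
      * intros t Ht. rewrite Rabs_minus_sym. apply Hvuc; [lra|]. rewrite Rabs_left1; lra.
    + replace (p + h - p) with h by ring. pose proof (Rmult_le_pos _ _ HCm0 Hlsum). lra.
  - eapply Rle_trans; [apply (osc_piece_bound p (p + h) Cm); auto; lra|].
    destruct (Hcov p) as [pr [Hpr Hin]]; [lra| lra|].
    assert (Hind : h <= lsum l (fun pr => ind (fst pr) (snd pr) p h)).
    { eapply Rle_trans; [|apply (lsum_in_le l _ pr Hpr)].
      - unfold ind. repeat destruct Rle_dec; lra.
      - intros; apply ind_nonneg; lra. }
    assert (Cm * h <= Cm * lsum l (fun pr => ind (fst pr) (snd pr) p h)) by (apply Rmult_le_compat_l; lra).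
    assert (0 <= h * (e1 + Cm * ga)) by (apply Rmult_le_pos; nra).
    replace (p + h - p) with h by ring. lra.
Qed.

(* Summing [osc_grid_piece] over a grid of N pieces of length h: the charged
   pieces cost at most the total length of l plus one step per interval. *)
Lemma osc_grid_estimate (l : list (R * R)) dl e1 ga Cm h N :
  0 < dl -> 0 <= ga -> 0 < h -> b = a + INR N * h ->
  (forall pr, In pr l -> fst pr <= snd pr) ->
  (forall t, a <= t <= b -> Rabs (v t) <= dl -> exists pr, In pr l /\ fst pr <= t <= snd pr) ->
  (forall t, Rabs (C t) <= Cm) ->
  (forall x y, Rabs (x - y) <= h -> Rabs (C x - C y) <= e1) ->
  (forall x y, a <= x <= b -> Rabs (x - y) <= h -> Rabs (v x - v y) <= ga * dl) ->
  Rabs (RInt (fun t => C t * cos (osc_phase t)) a b)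
    <= INR N * (h * (e1 + Cm * ga) + Cm * eps / (PI * dl))
       + Cm * (total_length l + INR (length l) * h).
Proof.
  intros Hdl Hga Hh Hb Hord Hcov HCm HCuc Hvuc.
  assert (HCm0 : 0 <= Cm) by (pose proof (HCm a); pose proof (Rabs_pos (C a)); lra).
  rewrite Hb, (chasles_sum a h N).
  eapply Rle_trans; [apply sumn_abs|].
  eapply Rle_trans; [apply (sumn_le _ (fun k => (h * (e1 + Cm * ga) + Cm * eps / (PI * dl))
      + Cm * lsum l (fun pr => ind (fst pr) (snd pr) (a + INR k * h) h)))|].
  - intros k Hk.
    assert (Hk1 : INR k + 1 <= INR N) by (rewrite <- S_INR; apply le_INR; lia).
    assert (Hk0 : 0 <= INR k) by apply pos_INR.
    replace (a + INR (S k) * h) with (a + INR k * h + h) by (rewrite S_INR; ring).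
    apply osc_grid_piece; auto; try lra; nra.
  - rewrite sumn_plus, sumn_scal, sumn_const, sumn_lsum.
    assert (Hcount : lsum l (fun pr => sumn (fun k => ind (fst pr) (snd pr) (a + INR k * h) h) N)
                     <= total_length l + INR (length l) * h).
    { rewrite total_length_lsum, <- lsum_const, <- lsum_plus.
      apply lsum_le. intros pr Hpr. apply count_grid_le; auto. }
    apply Rplus_le_compat_l, Rmult_le_compat_l; auto.
Qed.

End Oscillation.

Lemma contR_eps f x : contR f x -> forall e, 0 < e -> exists d, 0 < d /\ forall y, Rabs (y - x) < d -> Rabs (f y - f x) < e.
Proof.
  intros H e He. apply cont_to_pt in H. destruct (H e He) as [d [Hd H']].
  exists d; split; auto. intros y Hy. destruct (Req_dec y x) as [E|E].
  - subst; rewrite Rminus_eq_0, Rabs_R0; auto.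
  - apply H'. split; auto. split; auto. unfold D_x, no_cond; auto.
Qed.

Lemma UC_interval f a b : a <= b -> (forall t, contR f t) ->
  forall e, 0 < e -> exists d, 0 < d /\ forall x, a <= x <= b -> forall y, Rabs (x - y) < d -> Rabs (f x - f y) < e.
Proof.
  intros Hab Hc e He.
  destruct (qc_UC T1 (fun p => True /\ a <= snd p <= b) (fun p => f (snd p)) (qc_prod CSU _ a b Hab qc_unit)) with e as [d [Hd H]]; auto.
  - intros [[] x] [_ Hx] e' He'. destruct (contR_eps f x (Hc x) e' He') as [d [Hd H]].
    exists d; split; auto. intros [[] y] [_ Hy]. simpl in *. apply H. rewrite Rabs_minus_sym; auto.
  - exists d; split; auto. intros x Hx y Hxy. apply (H (tt, x) (conj I Hx) (tt, y)). split; simpl; auto.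
Qed.

Lemma fine_grid L h0 : 0 < L -> 0 < h0 ->
  exists (N : nat) h, 0 < h < h0 /\ 0 < INR N /\ INR N * h = L.
Proof.
  intros HL Hh0. destruct (archimed_cor1 (h0 / L)) as [N [HN HN0]]; [apply Rdiv_lt_0_compat; auto|].
  assert (HNr : 0 < INR N) by (apply lt_0_INR; auto).
  exists N, (L / INR N). repeat split; auto.
  - apply Rdiv_lt_0_compat; auto.
  - apply Rmult_lt_reg_r with (/ L); [apply Rinv_0_lt_compat; auto|].
    replace (L / INR N * / L) with (/ INR N) by (field; lra). unfold Rdiv in HN; auto.
  - field; lra.
Qed.

Definition thin_sublevels (a b : R) (v : R -> R) : Prop :=
  exists delta0, 0 < delta0 /\
  exists I : R -> list (R * R),
    (forall delta, 0 < delta < delta0 ->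
       (forall p, In p (I delta) -> fst p <= snd p) /\
       (forall s, a <= s <= b -> Rabs (v s) <= delta ->
          exists p, In p (I delta) /\ fst p <= s <= snd p)) /\
    (forall eta, 0 < eta -> exists r, 0 < r /\
       forall delta, 0 < delta < r -> delta < delta0 -> total_length (I delta) < eta).

Definition nondegenerate (a b : R) (v1 v2 v3 : R -> R) : Prop :=
  forall m1 m2 m3 : Z, (m1, m2, m3) <> (0%Z, 0%Z, 0%Z) ->
    thin_sublevels a b (fun s => IZR m1 * v1 s + IZR m2 * v2 s + IZR m3 * v3 s).

(* The arithmetic behind [oscillatory_decay]: with the parameters chosen there,
   each of the five error terms of [osc_grid_estimate] is below eta/4 or eta/8. *)
Lemma osc_budget eta Cm L LL TL dl eps h (N : nat) :
  0 < eta -> 0 < Cm -> 0 < L -> 0 <= LL -> 0 < dl -> 0 < INR N -> INR N * h = L ->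
  Cm * TL < eta / 4 -> 0 <= h <= eta / (4 * Cm * (LL + 1)) ->
  0 < eps < eta * PI * dl / (8 * INR N * Cm) ->
  INR N * (h * (eta / (8 * (L + 1)) + Cm * (eta / (8 * (L + 1) * Cm))) + Cm * eps / (PI * dl))
    + Cm * (TL + LL * h) < eta.
Proof.
  intros Heta HCm HL HLL Hdl HN HNh HTL [Hh HhL] [Heps Heps'].
  set (e1 := eta / (8 * (L + 1))). set (ga := eta / (8 * (L + 1) * Cm)).
  assert (E1 : INR N * (h * e1) < eta / 8).
  { rewrite <- Rmult_assoc, HNh. unfold e1. apply Rmult_lt_reg_r with (8 * (L + 1)); [lra|].
    replace (L * (eta / (8 * (L + 1))) * (8 * (L + 1))) with (L * eta) by (field; lra). nra. }
  assert (E2 : INR N * (h * (Cm * ga)) < eta / 8).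
  { rewrite <- Rmult_assoc, HNh. unfold ga. apply Rmult_lt_reg_r with (8 * (L + 1)); [lra|].
    replace (L * (Cm * (eta / (8 * (L + 1) * Cm))) * (8 * (L + 1))) with (L * eta) by (field; lra). nra. }
  assert (E3 : INR N * (Cm * eps / (PI * dl)) < eta / 8).
  { pose proof PI_RGT_0.
    replace (INR N * (Cm * eps / (PI * dl))) with (eps * (INR N * Cm / (PI * dl))) by (field; lra).
    apply Rlt_le_trans with (eta * PI * dl / (8 * INR N * Cm) * (INR N * Cm / (PI * dl))).
    - apply Rmult_lt_compat_r; auto. apply Rdiv_lt_0_compat; nra.
    - right; field; repeat split; lra. }
  assert (E4 : Cm * (LL * h) <= eta / 4).
  { apply Rle_trans with (Cm * (LL * (eta / (4 * Cm * (LL + 1))))).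
    { apply Rmult_le_compat_l; [lra|]; apply Rmult_le_compat_l; lra. }
    replace (Cm * (LL * (eta / (4 * Cm * (LL + 1))))) with (eta / 4 * (LL / (LL + 1))) by (field; lra).
    rewrite <- (Rmult_1_r (eta / 4)) at 2. apply Rmult_le_compat_l; [lra|].
    apply Rmult_le_reg_r with (LL + 1); [lra|]. replace (LL / (LL + 1) * (LL + 1)) with LL by (field; lra). lra. }
  replace (INR N * (h * (e1 + Cm * ga) + Cm * eps / (PI * dl)) + Cm * (TL + LL * h))
    with (INR N * (h * e1) + INR N * (h * (Cm * ga)) + INR N * (Cm * eps / (PI * dl)) + Cm * TL + Cm * (LL * h)) by ring.
  lra.
Qed.

(* Choose dl so that the intervals covering {|v| <= dl} have total length
   O(eta), then a grid fine enough for C and v to vary little on each step,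
   and finally eps small against that grid ([osc_grid_estimate]). *)
Theorem oscillatory_decay a b C u v th : a <= b -> UCR C -> BD C -> (forall t, contR u t) ->
  (forall t, a < t < b -> is_derive u t (v t)) -> (forall t, contR v t) ->
  thin_sublevels a b v ->
  forall eta, 0 < eta -> exists r, 0 < r /\ forall eps, 0 < eps < r ->
    Rabs (RInt (fun t => C t * cos (osc_phase u eps th t)) a b) < eta.
Proof.
  intros Hab UC BDC Huc Hud Hvc [dl0 [Hdl0 [I [Hcov HTL]]]] eta Heta.
  assert (HCc := UCR_continuous C UC).
  destruct (Req_dec a b) as [Eab|Nab].
  { exists 1; split; [lra|]. intros eps _. subst. rewrite RInt_point. simpl. unfold zero; simpl. rewrite Rabs_R0; auto. }
  destruct BDC as [M HM]. assert (HM0 : 0 <= M) by (apply (BD_nonneg C a); auto).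
  set (Cm := M + 1). assert (HCm : 0 < Cm) by (unfold Cm; lra).
  assert (HCt : forall t, Rabs (C t) <= Cm) by (intros; specialize (HM t); unfold Cm; lra).
  set (L := b - a). assert (HL : 0 < L) by (unfold L; lra).
  destruct (HTL (eta / (4 * Cm))) as [r1 [Hr1 HTL1]]. { apply Rdiv_lt_0_compat; lra. }
  set (dl := Rmin r1 dl0 / 2).
  assert (Hdl : 0 < dl) by (unfold dl; pose proof (Rmin_pos r1 dl0 Hr1 Hdl0); lra).
  assert (Hdlr : dl < r1) by (unfold dl; pose proof (Rmin_l r1 dl0); lra).
  assert (Hdl0' : dl < dl0) by (unfold dl; pose proof (Rmin_r r1 dl0); lra).
  destruct (Hcov dl (conj Hdl Hdl0')) as [Hord Hin].
  specialize (HTL1 dl (conj Hdl Hdlr) Hdl0').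
  set (l := I dl) in *. set (LL := INR (length l)). assert (HLL : 0 <= LL) by apply pos_INR.
  set (e1 := eta / (8 * (L + 1))). assert (He1 : 0 < e1) by (apply Rdiv_lt_0_compat; lra).
  set (ga := eta / (8 * (L + 1) * Cm)). assert (Hga : 0 < ga) by (apply Rdiv_lt_0_compat; nra).
  destruct (UC e1 He1) as [dC [HdC HdC']].
  destruct (UC_interval v a b Hab Hvc (ga * dl)) as [dv [Hdv Hdv']]. { apply Rmult_lt_0_compat; auto. }
  set (hL := eta / (4 * Cm * (LL + 1))). assert (HhL : 0 < hL) by (apply Rdiv_lt_0_compat; nra).
  destruct (fine_grid L (Rmin dC (Rmin dv hL)) HL) as [N [h [[Hh Hh0] [HN HNh]]]].
  { repeat apply Rmin_pos; auto. }
  pose proof (Rmin_l dC (Rmin dv hL)); pose proof (Rmin_r dC (Rmin dv hL)).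
  pose proof (Rmin_l dv hL); pose proof (Rmin_r dv hL).
  exists (eta * PI * dl / (8 * INR N * Cm)). split.
  { pose proof PI_RGT_0. apply Rdiv_lt_0_compat; [|nra]. apply Rmult_lt_0_compat; [nra|auto]. }
  intros eps [Heps Heps'].
  eapply Rle_lt_trans.
  { apply (osc_grid_estimate a b C u v eps th HCc Huc Hud Hvc Heps l dl e1 ga Cm h N); auto; try lra.
    - unfold L in HNh; lra.
    - intros x y Hxy. left. apply HdC'. lra.
    - intros x y Hx Hxy. left. apply Hdv'; auto. lra. }
  fold LL. apply (osc_budget eta Cm L LL (total_length l) dl eps h N); auto; try lra.
  - apply Rmult_lt_reg_r with (/ Cm); [apply Rinv_0_lt_compat; auto|].
    replace (Cm * total_length l * / Cm) with (total_length l) by (field; lra).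
    replace (eta / 4 * / Cm) with (eta / (4 * Cm)) by (field; lra). auto.
  - fold hL. lra.
Qed.

Lemma sin_cos_2kpi (k : Z) : sin (2 * PI * IZR k) = 0 /\ cos (2 * PI * IZR k) = 1.
Proof.
  assert (Shalf : sin (PI * IZR k) = 0) by (apply sin_eq_0_1; exists k; ring).
  split.
  - apply sin_eq_0_1. exists (2 * k)%Z. rewrite mult_IZR. simpl. ring.
  - replace (2 * PI * IZR k) with (2 * (PI * IZR k)) by ring. rewrite cos_2a_sin, Shalf. ring.
Qed.

Lemma sin_2kpi (k : Z) c : sin (2 * PI * IZR k + c) = sin c.
Proof. destruct (sin_cos_2kpi k) as [S1 C1]. rewrite sin_plus, S1, C1. ring. Qed.

Lemma cos_2kpi (k : Z) c : cos (2 * PI * IZR k + c) = cos c.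
Proof. destruct (sin_cos_2kpi k) as [S1 C1]. rewrite cos_plus, S1, C1. ring. Qed.

Lemma cos_per1 x : cos (2 * PI * (x + 1)) = cos (2 * PI * x).
Proof. replace (2 * PI * (x + 1)) with (2 * PI * IZR 1 + 2 * PI * x) by (simpl; ring). apply cos_2kpi. Qed.

Lemma int_cos_zero (k : Z) c : k <> 0%Z -> RInt (fun t => cos (2 * PI * IZR k * t + c)) 0 1 = 0.
Proof.
  intros Hk. assert (Hk' : IZR k <> 0) by (apply not_0_IZR; auto).
  pose proof PI_RGT_0.
  set (F := fun t => sin (2 * PI * IZR k * t + c) / (2 * PI * IZR k)).
  assert (HI : is_RInt (fun t => cos (2 * PI * IZR k * t + c)) 0 1 (minus (F 1) (F 0))).
  { apply (is_RInt_derive (V := R_CompleteNormedModule) F). unfold F.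
    - intros x _. auto_derive; auto. field. split; lra.
    - intros x _. apply cont_cos_comp.
      apply (cont_plus (fun t => 2 * PI * IZR k * t) (fun _ => c)); [|apply cont_const].
      apply (cont_mult (fun _ => 2 * PI * IZR k) (fun t => t)); [apply cont_const|].
      apply continuous_id. }
  apply (is_RInt_unique (V := R_CompleteNormedModule)) in HI. rewrite HI. unfold minus, plus, opp, F; simpl.
  rewrite Rmult_1_r, Rmult_0_r, Rplus_0_l, sin_2kpi. field. split; lra.
Qed.

Lemma cos_triple_product A B C : cos A * cos B * cos C =
  / 4 * (cos (A + B + C) + cos (A + B - C) + cos (A - B + C) + cos (A - B - C)).
Proof.
  unfold Rminus. repeat (rewrite cos_plus || rewrite sin_plus || rewrite cos_neg || rewrite sin_neg). field.
Qed.

(* Convolving in y with a separable kernel turns any function into a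
   trigonometric polynomial in y. *)
Inductive SepK : (R -> R -> R) -> Prop :=
 | sk_base (j : Z) th (l : R -> R) : UCR l -> BD l -> SepK (fun y z => cos (2 * PI * IZR j * y + th) * l z)
 | sk_plus k k' : SepK k -> SepK k' -> SepK (fun y z => k y z + k' y z)
 | sk_scal c k : SepK k -> SepK (fun y z => c * k y z)
 | sk_ext k k' : SepK k -> (forall y z, k y z = k' y z) -> SepK k'.

Definition kernel_fun (k : R -> R -> R) : T2 -> R := fun q => k (snd (fst q)) (snd q).

Lemma UCv_T2_y : UCv T2 (fun q => snd (fst q)).
Proof. apply (UCv_fst T1 snd). apply UCv_snd. Qed.

Lemma BUC_cos_kernel (j : Z) th l : UCR l -> BD l -> BUC T2 (kernel_fun (fun y z => cos (2 * PI * IZR j * y + th) * l z)).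
Proof.
  intros Ul Bl. unfold kernel_fun. apply (BUC_mult T2 (fun q => cos (2 * PI * IZR j * snd (fst q) + th)) (fun q => l (snd q))).
  - apply (BUC_compR T2 (fun q => 2 * PI * IZR j * snd (fst q) + th) cos); [|apply UCR_cos|apply BD_cos].
    apply UCv_lin. apply UCv_T2_y.
  - apply (BUC_compR T2 snd l); auto. apply UCv_snd.
Qed.

Lemma SepK_BUC k : SepK k -> BUC T2 (kernel_fun k).
Proof.
  induction 1.
  - apply BUC_cos_kernel; auto.
  - apply (BUC_plus T2 (kernel_fun k) (kernel_fun k')); auto.
  - apply (BUC_scal T2 c (kernel_fun k)); auto.
  - apply BUC_ext with (kernel_fun k); auto. intros; unfold kernel_fun; auto.
Qed.

Lemma UCR_BD_mult f g : UCR f -> BD f -> UCR g -> BD g -> UCR (fun x => f x * g x) /\ BD (fun x => f x * g x).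
Proof.
  intros Uf Bf Ug Bg.
  assert (B : BUC T1 (fun q => f (snd q) * g (snd q))).
  { apply (BUC_mult T1 (fun q => f (snd q)) (fun q => g (snd q))); apply (BUC_compR T1 snd); auto; apply UCv_snd. }
  destruct B as [U [M HM]]. split.
  - intros e He. destruct (U e He) as [d [Hd H]]. exists d; split; auto. intros x y Hxy.
    apply (H (tt, x) (tt, y)). split; simpl; auto.
  - exists M. intros x. apply (HM (tt, x)).
Qed.

(* Separable kernels are closed under products (product-to-sum formula for cosines). *)
Lemma SepK_mult_base j th l k : UCR l -> BD l -> SepK k ->
  SepK (fun y z => (cos (2 * PI * IZR j * y + th) * l z) * k y z).
Proof.
  intros Ul Bl H. induction H.
  - destruct (UCR_BD_mult l l0 Ul Bl H H0) as [U B].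
    apply sk_ext with (fun y z => / 2 * (cos (2 * PI * IZR (j + j0) * y + (th + th0)) * (l z * l0 z)) +
                                 / 2 * (cos (2 * PI * IZR (j - j0) * y + (th - th0)) * (l z * l0 z))).
    + apply sk_plus; apply sk_scal; apply sk_base; auto.
    + intros y z. rewrite plus_IZR, minus_IZR.
      replace (2 * PI * (IZR j + IZR j0) * y + (th + th0)) with ((2 * PI * IZR j * y + th) + (2 * PI * IZR j0 * y + th0)) by ring.
      replace (2 * PI * (IZR j - IZR j0) * y + (th - th0)) with ((2 * PI * IZR j * y + th) - (2 * PI * IZR j0 * y + th0)) by ring.
      rewrite cos_plus, cos_minus. field.
  - apply sk_ext with (fun y z => cos (2 * PI * IZR j * y + th) * l z * k y z + cos (2 * PI * IZR j * y + th) * l z * k' y z).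
    apply sk_plus; auto. intros; ring.
  - apply sk_ext with (fun y z => c * (cos (2 * PI * IZR j * y + th) * l z * k y z)).
    apply sk_scal; auto. intros; ring.
  - apply sk_ext with (fun y z => cos (2 * PI * IZR j * y + th) * l z * k y z); auto.
    intros; rewrite H0; auto.
Qed.

Lemma SepK_mult k k' : SepK k -> SepK k' -> SepK (fun y z => k y z * k' y z).
Proof.
  intros H H'. induction H.
  - apply SepK_mult_base; auto.
  - apply sk_ext with (fun y z => k y z * k' y z + k'0 y z * k' y z). apply sk_plus; auto. intros; ring.
  - apply sk_ext with (fun y z => c * (k y z * k' y z)). apply sk_scal; auto. intros; ring.
  - apply sk_ext with (fun y z => k y z * k' y z); auto. intros; rewrite H0; auto.
Qed.

Lemma UCR_cos_lin c k : UCR (fun z => cos (c * z + k)).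
Proof.
  assert (B : BUC T1 (fun q => cos (c * snd q + k))).
  { apply (BUC_compR T1 (fun q => c * snd q + k) cos); [|apply UCR_cos|apply BD_cos]. apply UCv_lin, UCv_snd. }
  destruct B as [U _]. intros e He. destruct (U e He) as [d [Hd H]]. exists d; split; auto. intros x y Hxy.
  apply (H (tt, x) (tt, y)). split; simpl; auto.
Qed.

(* (1 + cos 2 pi (y - z))^N is separable, by induction using cos(a - b) = cos a cos b + sin a sin b. *)
Lemma SepK_kernel N : SepK (fun y z => (1 + cos (2 * PI * (y - z))) ^ N).
Proof.
  induction N.
  - apply sk_ext with (fun y z => cos (2 * PI * IZR 0 * y + 0) * (fun _ => 1) z).
    apply sk_base; [apply UCR_const| apply BD_const]. intros; simpl. rewrite Rmult_0_r, Rmult_0_l, Rplus_0_l, cos_0. ring.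
  - apply sk_ext with (fun y z => (1 + cos (2 * PI * (y - z))) ^ N *
       (cos (2 * PI * IZR 0 * y + 0) * (fun _ => 1) z + cos (2 * PI * IZR 1 * y + 0) * (fun z => cos (2 * PI * z + 0)) z
        + cos (2 * PI * IZR 1 * y + - (PI / 2)) * (fun z => cos (2 * PI * z + - (PI / 2))) z)).
    + apply SepK_mult; auto. apply sk_plus; [apply sk_plus|]; apply sk_base; try apply UCR_const; try apply BD_const;
      try apply UCR_cos_lin; exists 1; intros; apply Rabs_le; apply COS_bound.
    + intros y z. simpl. rewrite Rmult_0_r, Rmult_0_l, Rplus_0_l, cos_0, !Rmult_1_r, !Rplus_0_r.
      assert (Hs : forall x, cos (x + - (PI / 2)) = sin x).
      { intros x. rewrite <- cos_neg. replace (- (x + - (PI / 2))) with (PI / 2 - x) by ring. apply cos_shift. }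
      rewrite !Hs. replace (2 * PI * (y - z)) with (2 * PI * y - 2 * PI * z) by ring. rewrite cos_minus. ring.
Qed.

(* Points of T5 extended by the three integration variables z1 z2 z3. *)
Notation T6 := (CSP T5).
Notation T7 := (CSP T6).
Notation T8 := (CSP T7).

Definition conv_integrand (k1 k2 k3 : R -> R -> R) (Psi : T5 -> R) (w : T8) : R :=
  k1 (gy1 (fst (fst (fst w)))) (snd (fst (fst w))) * k2 (gy2 (fst (fst (fst w)))) (snd (fst w)) *
  k3 (gy3 (fst (fst (fst w)))) (snd w) *
  Psi (mk5 (gs2 (fst (fst (fst w)))) (gs1 (fst (fst (fst w)))) (snd (fst (fst w))) (snd (fst w)) (snd w)).

Definition pint_cube (F : T8 -> R) : T5 -> R := pint (X := T5) 0 1 (pint (X := T6) 0 1 (pint (X := T7) 0 1 F)).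

Lemma UCv_T8p (h : T5 -> R) : UCv T5 h -> UCv T8 (fun w => h (fst (fst (fst w)))).
Proof.
  intros H. apply (UCv_fst T7 (fun w => h (fst (fst w)))). apply (UCv_fst T6 (fun w => h (fst w))).
  apply (UCv_fst T5 h). auto.
Qed.
Lemma UCv_z1 : UCv T8 (fun w => snd (fst (fst w))).
Proof. apply (UCv_fst T7 (fun w => snd (fst w))). apply (UCv_fst T6 snd). apply UCv_snd. Qed.
Lemma UCv_z2 : UCv T8 (fun w => snd (fst w)).
Proof. apply (UCv_fst T7 snd). apply UCv_snd. Qed.
Lemma UCv_z3 : UCv T8 (fun w => snd w).
Proof. apply UCv_snd. Qed.

Lemma UCv_min (X : CS) (h1 h2 : X -> R) : UCv X h1 -> UCv X h2 -> forall d, 0 < d -> exists d', 0 < d' /\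
  forall x y, cl d' x y -> Rabs (h1 x - h1 y) < d /\ Rabs (h2 x - h2 y) < d.
Proof.
  intros H1 H2 d Hd. destruct (H1 d Hd) as [d1 [Hd1 A1]]. destruct (H2 d Hd) as [d2 [Hd2 A2]].
  exists (Rmin d1 d2); split; [apply Rmin_pos; auto|]. intros x y Hxy. split.
  apply A1; eapply cl_mono; [|apply Hxy]; apply Rmin_l.
  apply A2; eapply cl_mono; [|apply Hxy]; apply Rmin_r.
Qed.

Lemma BUC_k2comp (X : CS) (K : T2 -> R) (h1 h2 : X -> R) : BUC T2 K -> UCv X h1 -> UCv X h2 ->
  BUC X (fun x => K ((tt, h1 x), h2 x)).
Proof.
  intros BK H1 H2. apply (BUC_comp X T2 (fun x => ((tt, h1 x), h2 x)) K); auto.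
  intros d Hd. destruct (UCv_min X h1 h2 H1 H2 d Hd) as [d' [Hd' H]]. exists d'; split; auto.
  intros x y Hxy. destruct (H x y Hxy). simpl. auto.
Qed.

Lemma BUC_5comp (X : CS) (K : T5 -> R) (h1 h2 h3 h4 h5 : X -> R) : BUC T5 K ->
  UCv X h1 -> UCv X h2 -> UCv X h3 -> UCv X h4 -> UCv X h5 ->
  BUC X (fun x => K (mk5 (h1 x) (h2 x) (h3 x) (h4 x) (h5 x))).
Proof.
  intros BK H1 H2 H3 H4 H5. apply (BUC_comp X T5 (fun x => mk5 (h1 x) (h2 x) (h3 x) (h4 x) (h5 x)) K); auto.
  intros d Hd. destruct (UCv_min X h1 h2 H1 H2 d Hd) as [d1 [Hd1 A]].
  destruct (UCv_min X h3 h4 H3 H4 d Hd) as [d2 [Hd2 B]].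
  destruct (H5 d Hd) as [d3 [Hd3 C]].
  exists (Rmin d1 (Rmin d2 d3)); split; [repeat apply Rmin_pos; auto|]. intros x y Hxy.
  assert (X1 : cl d1 x y) by (eapply cl_mono; [|apply Hxy]; apply Rmin_l).
  assert (X2 : cl d2 x y) by (eapply cl_mono; [|apply Hxy]; eapply Rle_trans; [apply Rmin_r| apply Rmin_l]).
  assert (X3 : cl d3 x y) by (eapply cl_mono; [|apply Hxy]; eapply Rle_trans; [apply Rmin_r| apply Rmin_r]).
  destruct (A x y X1). destruct (B x y X2). specialize (C x y X3).
  apply cl5. unfold mk5, gs2, gs1, gy1, gy2, gy3; simpl. tauto.
Qed.

Lemma BUC_conv_integrand k1 k2 k3 Psi : SepK k1 -> SepK k2 -> SepK k3 -> BUC T5 Psi -> BUC T8 (conv_integrand k1 k2 k3 Psi).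
Proof.
  intros S1 S2 S3 BP. unfold conv_integrand.
  apply (BUC_mult T8 (fun w => k1 (gy1 (fst (fst (fst w)))) (snd (fst (fst w))) * k2 (gy2 (fst (fst (fst w)))) (snd (fst w)) *
     k3 (gy3 (fst (fst (fst w)))) (snd w))).
  - apply (BUC_mult T8 (fun w => k1 (gy1 (fst (fst (fst w)))) (snd (fst (fst w))) * k2 (gy2 (fst (fst (fst w)))) (snd (fst w)))).
    + apply (BUC_mult T8 (fun w => k1 (gy1 (fst (fst (fst w)))) (snd (fst (fst w))))).
      * exact (BUC_k2comp T8 (kernel_fun k1) _ _ (SepK_BUC k1 S1) (UCv_T8p gy1 UCv_gy1) UCv_z1).
      * exact (BUC_k2comp T8 (kernel_fun k2) _ _ (SepK_BUC k2 S2) (UCv_T8p gy2 UCv_gy2) UCv_z2).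
    + exact (BUC_k2comp T8 (kernel_fun k3) _ _ (SepK_BUC k3 S3) (UCv_T8p gy3 UCv_gy3) UCv_z3).
  - apply (BUC_5comp T8 Psi (fun w => gs2 (fst (fst (fst w)))) (fun w => gs1 (fst (fst (fst w))))
      (fun w => snd (fst (fst w))) (fun w => snd (fst w)) (fun w => snd w) BP
      (UCv_T8p gs2 UCv_gs2) (UCv_T8p gs1 UCv_gs1) UCv_z1 UCv_z2 UCv_z3).
Qed.

Lemma pint_cube_BUC F : BUC T8 F -> BUC T5 (pint_cube F).
Proof. intros; unfold pint_cube; repeat apply pint_BUC; auto; lra. Qed.

Lemma pint_cube_plus F G p : BUC T8 F -> BUC T8 G -> pint_cube (fun w => F w + G w) p = pint_cube F p + pint_cube G p.
Proof.
  intros BF BG. unfold pint_cube.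
  rewrite (pint_plus_f T7 0 1 F G) by auto.
  rewrite (pint_plus_f T6 0 1) by (apply pint_BUC; auto; lra).
  apply pint_plus; repeat apply pint_BUC; auto; lra.
Qed.

Lemma pint_cube_scal c F p : BUC T8 F -> pint_cube (fun w => c * F w) p = c * pint_cube F p.
Proof.
  intros BF. unfold pint_cube.
  rewrite (pint_scal_f T7 0 1 c F) by auto.
  rewrite (pint_scal_f T6 0 1 c) by (apply pint_BUC; auto; lra).
  apply pint_scal; repeat apply pint_BUC; auto; lra.
Qed.

Lemma pint_cube_prod g1 g2 g3 c p : (forall y a b, ex_RInt (g1 y) a b) -> (forall y a b, ex_RInt (g2 y) a b) ->
  (forall y a b, ex_RInt (g3 y) a b) ->
  pint_cube (conv_integrand g1 g2 g3 (fun _ => c)) p = RInt (g1 (gy1 p)) 0 1 * RInt (g2 (gy2 p)) 0 1 * RInt (g3 (gy3 p)) 0 1 * c.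
Proof.
  intros E1 E2 E3. unfold pint_cube, pint, conv_integrand. simpl.
  set (A := RInt (g1 (gy1 p)) 0 1). set (B := RInt (g2 (gy2 p)) 0 1). set (C := RInt (g3 (gy3 p)) 0 1).
  rewrite (RInt_ext_pw _ (fun t => (B * C * c) * g1 (gy1 p) t)).
  - rewrite RInt_scalR; auto. fold A. ring.
  - intros t. rewrite (RInt_ext_pw _ (fun t0 => (g1 (gy1 p) t * C * c) * g2 (gy2 p) t0)).
    + rewrite RInt_scalR; auto. fold B. ring.
    + intros t0. rewrite (RInt_ext_pw _ (fun t1 => (g1 (gy1 p) t * g2 (gy2 p) t0 * c) * g3 (gy3 p) t1)) by (intros; ring).
      rewrite RInt_scalR; auto. fold C. ring.
Qed.

Lemma pint_cube_le F G p : BUC T8 F -> BUC T8 G -> (forall z1 z2 z3, F (((p, z1), z2), z3) <= G (((p, z1), z2), z3)) ->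
  pint_cube F p <= pint_cube G p.
Proof.
  intros BF BG H. unfold pint_cube. apply pint_le; [lra| repeat apply pint_BUC; auto; lra| repeat apply pint_BUC; auto; lra|].
  intros t. apply pint_le; [lra| repeat apply pint_BUC; auto; lra| repeat apply pint_BUC; auto; lra|].
  intros t'. apply pint_le; [lra| auto| auto| auto].
Qed.

Lemma pint_cube_minus F G p : BUC T8 F -> BUC T8 G -> pint_cube (fun w => F w - G w) p = pint_cube F p - pint_cube G p.
Proof.
  intros BF BG. replace (fun w => F w - G w) with (fun w => F w + (-1) * G w)
    by (apply functional_extensionality; intros; ring).
  rewrite pint_cube_plus, pint_cube_scal; auto. ring. apply BUC_scal; auto.
Qed.

Lemma pint_cube_abs_le F G p : BUC T8 F -> BUC T8 G ->
  (forall z1 z2 z3, Rabs (F (((p, z1), z2), z3)) <= G (((p, z1), z2), z3)) -> Rabs (pint_cube F p) <= pint_cube G p.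
Proof.
  intros BF BG H. apply Rabs_le. split.
  - assert (E : pint_cube (fun w => -1 * G w) p = - pint_cube G p) by (rewrite pint_cube_scal; auto; ring).
    rewrite <- E. apply pint_cube_le; auto. apply BUC_scal; auto.
    intros z1 z2 z3. specialize (H z1 z2 z3). apply Rabs_le_between in H. lra.
  - apply pint_cube_le; auto. intros z1 z2 z3. specialize (H z1 z2 z3). apply Rabs_le_between in H. lra.
Qed.

Lemma pint_pull (X : CS) a b (F G : CSP X -> R) (c : X -> R) x : BUC (CSP X) G ->
  (forall t, F (x, t) = c x * G (x, t)) -> pint a b F x = c x * pint a b G x.
Proof.
  intros BG H. unfold pint. rewrite (RInt_ext _ (fun t => c x * G (x, t))) by auto.
  apply RInt_scalR. apply pint_ex; auto.
Qed.

Section Main.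
Variables a1 b1 a2 b2 : R.
Hypothesis Hab1 : a1 <= b1.
Hypothesis Hab2 : a2 <= b2.
Variables Y1 Y2 Y3 : R -> R.
Hypothesis UY1 : UCR Y1.
Hypothesis UY2 : UCR Y2.
Hypothesis UY3 : UCR Y3.
Variables dY1 dY2 dY3 : R -> R.
Hypothesis HYd1 : forall t, a2 < t < b2 -> is_derive Y1 t (dY1 t).
Hypothesis HYd2 : forall t, a2 < t < b2 -> is_derive Y2 t (dY2 t).
Hypothesis HYd3 : forall t, a2 < t < b2 -> is_derive Y3 t (dY3 t).
Hypothesis HdYc1 : forall t, contR dY1 t.
Hypothesis HdYc2 : forall t, contR dY2 t.
Hypothesis HdYc3 : forall t, contR dY3 t.
Hypothesis Hnd : nondegenerate a2 b2 dY1 dY2 dY3.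

Definition mean_int (G : T5 -> R) : R :=
  pint (X := CSU) a2 b2 (pint (X := T1) a1 b1 (pint (X := T2) 0 1 (pint (X := T3) 0 1 (pint (X := T4) 0 1 G)))) tt.

Definition osc_point (eps : R) (q : T2) : T5 :=
  (((q, Y1 (snd (fst q)) / eps), Y2 (snd (fst q)) / eps), Y3 (snd (fst q)) / eps).

Definition osc_int (G : T5 -> R) (eps : R) : R :=
  pint (X := CSU) a2 b2 (pint (X := T1) a1 b1 (fun q => G (osc_point eps q))) tt.

Lemma UCR_div f eps : 0 < eps -> UCR f -> forall d, 0 < d -> exists d', 0 < d' /\
  forall x y, Rabs (x - y) < d' -> Rabs (f x / eps - f y / eps) < d.
Proof.
  intros He Uf d Hd. destruct (Uf (d * eps)) as [d' [Hd' H]]; [nra|]. exists d'; split; auto.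
  intros x y Hxy. specialize (H x y Hxy).
  replace (f x / eps - f y / eps) with ((f x - f y) / eps) by (field; lra).
  rewrite Rabs_div by lra. rewrite (Rabs_pos_eq eps) by lra.
  apply Rmult_lt_reg_r with eps; auto. unfold Rdiv. rewrite Rmult_assoc, Rinv_l, Rmult_1_r; lra.
Qed.

Lemma osc_point_UC eps : 0 < eps -> UCmap T2 T5 (osc_point eps).
Proof.
  intros He d Hd.
  destruct (UCR_div Y1 eps He UY1 d Hd) as [d1 [Hd1 H1]].
  destruct (UCR_div Y2 eps He UY2 d Hd) as [d2 [Hd2 H2]].
  destruct (UCR_div Y3 eps He UY3 d Hd) as [d3 [Hd3 H3]].
  exists (Rmin d (Rmin d1 (Rmin d2 d3))). split.
  { repeat apply Rmin_pos; auto. }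
  intros [[[] s2] s1] [[[] t2] t1] [[_ A] B]. simpl in *.
  pose proof (Rmin_l d (Rmin d1 (Rmin d2 d3))). pose proof (Rmin_r d (Rmin d1 (Rmin d2 d3))).
  pose proof (Rmin_l d1 (Rmin d2 d3)). pose proof (Rmin_r d1 (Rmin d2 d3)).
  pose proof (Rmin_l d2 d3). pose proof (Rmin_r d2 d3).
  repeat split; simpl; try lra.
  apply H1; lra. apply H2; lra. apply H3; lra.
Qed.

Lemma BUC_osc_point G eps : 0 < eps -> BUC T5 G -> BUC T2 (fun q => G (osc_point eps q)).
Proof. intros He HG. apply BUC_comp; auto. apply osc_point_UC; auto. Qed.

Lemma mean_int_plus G H : BUC T5 G -> BUC T5 H -> mean_int (fun p => G p + H p) = mean_int G + mean_int H.
Proof.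
  intros HG HH. unfold mean_int.
  rewrite pint_plus_f by auto.
  rewrite pint_plus_f by (apply pint_BUC; auto; lra).
  rewrite pint_plus_f by (repeat apply pint_BUC; auto; lra).
  rewrite pint_plus_f by (repeat apply pint_BUC; auto; lra).
  apply pint_plus; repeat apply pint_BUC; auto; lra.
Qed.

Lemma mean_int_scal c G : BUC T5 G -> mean_int (fun p => c * G p) = c * mean_int G.
Proof.
  intros HG. unfold mean_int.
  rewrite pint_scal_f by auto.
  rewrite pint_scal_f by (apply pint_BUC; auto; lra).
  rewrite pint_scal_f by (repeat apply pint_BUC; auto; lra).
  rewrite pint_scal_f by (repeat apply pint_BUC; auto; lra).
  apply pint_scal; repeat apply pint_BUC; auto; lra.
Qed.

Lemma osc_int_plus G H eps : 0 < eps -> BUC T5 G -> BUC T5 H -> osc_int (fun p => G p + H p) eps = osc_int G eps + osc_int H eps.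
Proof.
  intros He HG HH. unfold osc_int.
  rewrite (pint_plus_f T1 a1 b1 (fun q => G (osc_point eps q)) (fun q => H (osc_point eps q))) by (apply BUC_osc_point; auto).
  apply pint_plus; apply pint_BUC; auto; apply BUC_osc_point; auto.
Qed.

Lemma osc_int_scal c G eps : 0 < eps -> BUC T5 G -> osc_int (fun p => c * G p) eps = c * osc_int G eps.
Proof.
  intros He HG. unfold osc_int.
  rewrite (pint_scal_f T1 a1 b1 c (fun q => G (osc_point eps q))) by (apply BUC_osc_point; auto).
  apply pint_scal; apply pint_BUC; auto; apply BUC_osc_point; auto.
Qed.

Lemma mean_int_close G H c : BUC T5 G -> BUC T5 H -> (forall p, Rabs (G p - H p) <= c) ->
  Rabs (mean_int G - mean_int H) <= (b2 - a2) * ((b1 - a1) * c).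
Proof.
  intros HG HH Hc. unfold mean_int.
  replace ((b2 - a2) * ((b1 - a1) * c)) with ((b2 - a2) * ((b1 - a1) * ((1 - 0) * ((1 - 0) * ((1 - 0) * c))))) by ring.
  apply pint_close; [lra| repeat apply pint_BUC; auto; lra| repeat apply pint_BUC; auto; lra|].
  intros p; apply pint_close; [lra| repeat apply pint_BUC; auto; lra| repeat apply pint_BUC; auto; lra|].
  intros q; apply pint_close; [lra| repeat apply pint_BUC; auto; lra| repeat apply pint_BUC; auto; lra|].
  intros r; apply pint_close; [lra| repeat apply pint_BUC; auto; lra| repeat apply pint_BUC; auto; lra|].
  intros w; apply pint_close; [lra| auto| auto|]. auto.
Qed.

Lemma osc_int_close G H c eps : 0 < eps -> BUC T5 G -> BUC T5 H -> (forall p, Rabs (G p - H p) <= c) ->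
  Rabs (osc_int G eps - osc_int H eps) <= (b2 - a2) * ((b1 - a1) * c).
Proof.
  intros He HG HH Hc. unfold osc_int.
  apply pint_close; [lra| apply pint_BUC; auto; apply BUC_osc_point; auto| apply pint_BUC; auto; apply BUC_osc_point; auto|].
  intros p; apply pint_close; [lra| apply BUC_osc_point; auto| apply BUC_osc_point; auto|]. auto.
Qed.

Definition Homog (G : T5 -> R) := BUC T5 G /\ forall eta, 0 < eta -> exists r, 0 < r /\
  forall eps, 0 < eps < r -> Rabs (osc_int G eps - mean_int G) < eta.

Lemma Homog_ext G H : Homog G -> (forall p, G p = H p) -> Homog H.
Proof. intros HG E. replace H with G; auto. apply functional_extensionality; auto. Qed.

Lemma Homog_plus G H : Homog G -> Homog H -> Homog (fun p => G p + H p).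
Proof.
  intros [BG HG] [BH HH]. split; [apply BUC_plus; auto|].
  intros eta Heta. destruct (HG (eta/2)) as [r1 [Hr1 H1]]; [lra|].
  destruct (HH (eta/2)) as [r2 [Hr2 H2]]; [lra|].
  exists (Rmin r1 r2); split; [apply Rmin_pos; auto|]. intros eps [He1 He2].
  rewrite osc_int_plus, mean_int_plus by auto.
  pose proof (Rmin_l r1 r2); pose proof (Rmin_r r1 r2).
  specialize (H1 eps ltac:(lra)); specialize (H2 eps ltac:(lra)).
  replace (osc_int G eps + osc_int H eps - (mean_int G + mean_int H)) with ((osc_int G eps - mean_int G) + (osc_int H eps - mean_int H)) by ring.
  eapply Rle_lt_trans; [apply Rabs_triang| lra].
Qed.

Lemma Homog_scal c G : Homog G -> Homog (fun p => c * G p).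
Proof.
  intros [BG HG]. split; [apply BUC_scal; auto|].
  intros eta Heta. destruct (HG (eta / (Rabs c + 1))) as [r [Hr H]].
  { apply Rdiv_lt_0_compat; auto; pose proof (Rabs_pos c); lra. }
  exists r; split; auto. intros eps Heps. rewrite osc_int_scal, mean_int_scal by (auto; lra).
  rewrite <- Rmult_minus_distr_l, Rabs_mult. specialize (H eps Heps).
  pose proof (Rabs_pos c). pose proof (Rabs_pos (osc_int G eps - mean_int G)).
  apply Rle_lt_trans with ((Rabs c + 1) * Rabs (osc_int G eps - mean_int G)). nra.
  replace eta with ((Rabs c + 1) * (eta / (Rabs c + 1))) by (field; lra).
  apply Rmult_lt_compat_l; lra.
Qed.

Lemma Homog_approx G : BUC T5 G ->
  (forall eta, 0 < eta -> exists P, Homog P /\ forall p, Rabs (G p - P p) <= eta) -> Homog G.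
Proof.
  intros BG HA. split; auto. intros eta Heta.
  set (A := (b2 - a2) * (b1 - a1) + 1).
  assert (HA0 : 0 < A) by (unfold A; nra).
  destruct (HA (eta / (4 * A))) as [P [[BP HP] HGP]]. { apply Rdiv_lt_0_compat; lra. }
  destruct (HP (eta/2)) as [r [Hr Hr']]; [lra|].
  exists r; split; auto. intros eps Heps.
  assert (E1 := osc_int_close G P _ eps ltac:(lra) BG BP HGP).
  assert (E2 := mean_int_close G P _ BG BP HGP).
  specialize (Hr' eps Heps).
  assert (Hq : (b2 - a2) * ((b1 - a1) * (eta / (4 * A))) <= eta / 4).
  { replace ((b2 - a2) * ((b1 - a1) * (eta / (4 * A)))) with (((b2 - a2) * (b1 - a1)) * (eta / (4 * A))) by ring.
    assert (0 <= (b2 - a2) * (b1 - a1)) by nra.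
    apply Rle_trans with (A * (eta / (4 * A))). apply Rmult_le_compat_r. left; apply Rdiv_lt_0_compat; lra. unfold A; lra.
    right; field; lra. }
  replace (osc_int G eps - mean_int G) with ((osc_int G eps - osc_int P eps) + (osc_int P eps - mean_int P) + (mean_int P - mean_int G)) by ring.
  rewrite Rabs_minus_sym in E2.
  eapply Rle_lt_trans; [apply Rabs_triang|].
  pose proof (Rabs_triang (osc_int G eps - osc_int P eps) (osc_int P eps - mean_int P)). lra.
Qed.

Definition s_only (C : T5 -> R) := forall p q, gs2 p = gs2 q -> gs1 p = gs1 q -> C p = C q.

Lemma Homog_s_only G : BUC T5 G -> s_only G -> Homog G.
Proof.
  intros BG SG. split; auto. intros eta Heta. exists 1; split; [lra|]. intros eps Heps.
  assert (E : osc_int G eps = mean_int G).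
  { unfold osc_int, mean_int. f_equal. f_equal. apply functional_extensionality. intros q.
    symmetry. apply pint01_const. intros t1. apply pint01_const. intros t2. apply pint01_const. intros t3.
    apply SG; reflexivity. }
  rewrite E, Rminus_eq_0, Rabs_R0; auto.
Qed.

Lemma BUC_cosmode (m1 m2 m3 : Z) th :
  BUC T5 (fun p => cos (2 * PI * (IZR m1 * gy1 p + IZR m2 * gy2 p + IZR m3 * gy3 p) + th)).
Proof.
  apply (BUC_compR T5 (fun p => 2 * PI * (IZR m1 * gy1 p + IZR m2 * gy2 p + IZR m3 * gy3 p) + th) cos).
  - apply UCv_lin. apply UCv_plus; [apply UCv_plus|]; apply UCv_scal.
    apply UCv_gy1. apply UCv_gy2. apply UCv_gy3.
  - apply UCR_cos.
  - apply BD_cos.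
Qed.

Lemma pint01_mode (X : CS) (F : CSP X -> R) x K A (k : Z) th :
  (forall t, F (x, t) = K * cos (2 * PI * (A + IZR k * t) + th)) ->
  pint 0 1 F x = if Z.eq_dec k 0 then K * cos (2 * PI * A + th) else 0.
Proof.
  intros H. unfold pint.
  rewrite (RInt_ext _ (fun t => K * cos (2 * PI * IZR k * t + (2 * PI * A + th)))).
  2:{ intros t _. rewrite H. f_equal. f_equal. ring. }
  rewrite RInt_scalR.
  2:{ apply ex_RInt_cont. intros t. apply cont_cos_comp.
      apply (cont_plus (fun t => 2 * PI * IZR k * t) (fun _ => 2 * PI * A + th)); [|apply cont_const].
      apply (cont_mult (fun _ => 2 * PI * IZR k) (fun t => t)); [apply cont_const|]. apply continuous_id. }
  destruct (Z.eq_dec k 0) as [E|E].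
  - subst. rewrite (RInt_ext _ (fun _ => cos (2 * PI * A + th))).
    2:{ intros t _. f_equal. simpl. ring. }
    rewrite RInt_const. unfold scal; simpl. unfold mult; simpl. ring.
  - rewrite int_cos_zero by auto. ring.
Qed.

Definition mode_fun (C : T5 -> R) (m1 m2 m3 : Z) th p :=
  C p * cos (2 * PI * (IZR m1 * gy1 p + IZR m2 * gy2 p + IZR m3 * gy3 p) + th).

Lemma BUC_mode_fun C m1 m2 m3 th : BUC T5 C -> BUC T5 (mode_fun C m1 m2 m3 th).
Proof. intros BC. apply BUC_mult; auto. apply BUC_cosmode. Qed.

(* A nonzero mode has mean zero over the unit cube, integrating first in the
   last variable y_i with m_i <> 0 ([pint01_mode]). *)
Lemma mean_int_mode C m1 m2 m3 th : s_only C -> (m1, m2, m3) <> (0%Z, 0%Z, 0%Z) ->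
  mean_int (mode_fun C m1 m2 m3 th) = 0.
Proof.
  intros SC NE. set (G := mode_fun C m1 m2 m3 th).
  assert (HL1 : forall q y1 y2, pint 0 1 G (q, y1, y2) =
      if Z.eq_dec m3 0 then C (q, y1, y2, 0) * cos (2 * PI * (IZR m1 * y1 + IZR m2 * y2) + th) else 0).
  { intros q y1 y2. apply pint01_mode. intros t. unfold G, mode_fun.
    destruct q as [[[] s2] s1]. rewrite (SC _ (((((tt, s2), s1), y1), y2), 0)) by reflexivity.
    unfold gy1, gy2, gy3; simpl. f_equal. }
  assert (HL3 : forall q, pint 0 1 (pint 0 1 (pint 0 1 G)) q = 0).
  { intros q. destruct (Z.eq_dec m3 0) as [E3|E3].
    - assert (HL2 : forall q y1, pint 0 1 (pint 0 1 G) (q, y1) =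
         if Z.eq_dec m2 0 then C (q, y1, 0, 0) * cos (2 * PI * (IZR m1 * y1) + th) else 0).
      { intros q0 y1. apply pint01_mode. intros t. rewrite HL1.
        destruct q0 as [[[] s2] s1]. rewrite (SC _ (((((tt, s2), s1), y1), 0), 0)) by reflexivity.
        f_equal. }
      destruct (Z.eq_dec m2 0) as [E2|E2].
      + assert (E1 : m1 <> 0%Z) by (intros E1; apply NE; subst; reflexivity).
        transitivity (if Z.eq_dec m1 0 then C (q, 0, 0, 0) * cos (2 * PI * 0 + th) else 0).
        2:{ destruct (Z.eq_dec m1 0); tauto. }
        apply pint01_mode. intros t. rewrite HL2.
        destruct q as [[[] s2] s1]. rewrite (SC _ (((((tt, s2), s1), 0), 0), 0)) by reflexivity.
        f_equal. f_equal. f_equal. ring.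
      + apply pint_zero. intros t. rewrite HL2. destruct (Z.eq_dec m2 0); tauto.
    - apply pint_zero. intros t. apply pint_zero. intros t'. destruct q. rewrite HL1.
      destruct (Z.eq_dec m3 0); tauto. }
  unfold mean_int. apply pint_zero. intros t. apply pint_zero. intros t'. apply HL3.
Qed.

Definition s_slice (C : T5 -> R) : T2 -> R := fun q => C (mk5 (snd (fst q)) (snd q) 0 0 0).

Lemma BUC_s_slice C : BUC T5 C -> BUC T2 (s_slice C).
Proof.
  intros BC. apply (BUC_comp T2 T5 (fun q => mk5 (snd (fst q)) (snd q) 0 0 0) C); auto.
  intros d Hd. exists d; split; auto. intros [[[] x2] x1] [[[] y2] y1] [[_ H2] H1].
  simpl in *. repeat split; auto; rewrite Rminus_eq_0, Rabs_R0; auto.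
Qed.

Definition s_profile (C : T5 -> R) (s2 : R) : R := pint a1 b1 (s_slice C) (tt, s2).

Lemma s_profile_BUC C : BUC T5 C -> UCR (s_profile C) /\ BD (s_profile C).
Proof.
  intros BC. destruct (pint_BUC T1 a1 b1 (s_slice C) Hab1 (BUC_s_slice C BC)) as [U [M HM]].
  split; [|exists M; intros; apply HM].
  intros e He. destruct (U e He) as [d [Hd H]]. exists d; split; auto.
  intros x y Hxy. apply H. split; simpl; auto.
Qed.

Definition mode_phase (m1 m2 m3 : Z) (t : R) : R := IZR m1 * Y1 t + IZR m2 * Y2 t + IZR m3 * Y3 t.
Definition mode_speed (m1 m2 m3 : Z) (t : R) : R := IZR m1 * dY1 t + IZR m2 * dY2 t + IZR m3 * dY3 t.

Lemma mode_phase_regular m1 m2 m3 :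
  (forall t, contR (mode_phase m1 m2 m3) t) /\
  (forall t, a2 < t < b2 -> is_derive (mode_phase m1 m2 m3) t (mode_speed m1 m2 m3 t)) /\
  (forall t, contR (mode_speed m1 m2 m3) t).
Proof.
  unfold mode_phase, mode_speed. split; [|split].
  - intros t. apply (cont_plus (fun t => IZR m1 * Y1 t + IZR m2 * Y2 t) (fun t => IZR m3 * Y3 t));
      [apply (cont_plus (fun t => IZR m1 * Y1 t) (fun t => IZR m2 * Y2 t))|];
      (apply cont_mult; [apply cont_const| apply UCR_continuous; auto]).
  - intros t Ht. auto_derive.
    + repeat split; [exists (dY1 t)| exists (dY2 t)| exists (dY3 t)]; auto.
    + replace (Derive (fun x => Y1 x) t) with (dY1 t) by (symmetry; apply is_derive_unique; auto).
      replace (Derive (fun x => Y2 x) t) with (dY2 t) by (symmetry; apply is_derive_unique; auto).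
      replace (Derive (fun x => Y3 x) t) with (dY3 t) by (symmetry; apply is_derive_unique; auto). ring.
  - intros t. apply (cont_plus (fun t => IZR m1 * dY1 t + IZR m2 * dY2 t) (fun t => IZR m3 * dY3 t));
      [apply (cont_plus (fun t => IZR m1 * dY1 t) (fun t => IZR m2 * dY2 t))|];
      (apply cont_mult; [apply cont_const| auto]).
Qed.

(* Along the curve a mode is C(s) cos(2 pi m.Y(s2)/eps + th): its oscillatory
   integral is a one-dimensional oscillatory integral of the s1-average of C. *)
Lemma osc_int_mode C m1 m2 m3 th eps : BUC T5 C -> s_only C -> 0 < eps ->
  osc_int (mode_fun C m1 m2 m3 th) eps =
  RInt (fun t => s_profile C t * cos (osc_phase (mode_phase m1 m2 m3) eps th t)) a2 b2.
Proof.
  intros BC SC Heps. unfold osc_int, pint. apply RInt_ext. intros s2 _.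
  rewrite (RInt_ext _ (fun s1 => cos (osc_phase (mode_phase m1 m2 m3) eps th s2) * s_slice C (tt, s2, s1))).
  2:{ intros s1 _. unfold mode_fun, s_slice. simpl.
      rewrite (SC _ (mk5 s2 s1 0 0 0)) by reflexivity. rewrite Rmult_comm. f_equal. f_equal.
      unfold osc_phase, mode_phase, gy1, gy2, gy3; simpl. field. lra. }
  rewrite RInt_scalR. unfold s_profile, pint. apply Rmult_comm.
  apply (pint_ex T1 a1 b1 (s_slice C) (tt, s2) (BUC_s_slice C BC)).
Qed.

(* Every Fourier mode homogenizes: the zero mode is independent of y, and a
   nonzero mode has mean 0 while its oscillatory integral decays by
   [oscillatory_decay] applied to the phase m.Y, whose derivative m.Y' has thin
   sublevel sets by non-degeneracy. *)
Lemma Homog_mode C (m1 m2 m3 : Z) th : BUC T5 C -> s_only C -> Homog (mode_fun C m1 m2 m3 th).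
Proof.
  intros BC SC. assert (BG := BUC_mode_fun C m1 m2 m3 th BC).
  destruct (classic ((m1, m2, m3) = (0%Z, 0%Z, 0%Z))) as [E|NE].
  { inversion E; subst. apply Homog_s_only; auto. intros p q H1 H2. unfold mode_fun.
    rewrite (SC p q H1 H2). f_equal. f_equal. simpl. ring. }
  split; auto. intros eta Heta.
  destruct (s_profile_BUC C BC) as [UCh BDCh].
  destruct (mode_phase_regular m1 m2 m3) as [Huc [Hud Hvc]].
  destruct (oscillatory_decay a2 b2 (s_profile C) _ _ th Hab2 UCh BDCh Huc Hud Hvc (Hnd m1 m2 m3 NE) eta Heta)
    as [r [Hr Hr']].
  exists r; split; auto. intros eps Heps.
  rewrite mean_int_mode, Rminus_0_r, osc_int_mode by (auto; lra). apply Hr'; auto.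
Qed.

(* A product of three one-variable cosines times C(s) is a combination of four modes. *)
Lemma Homog_cos3 C (j1 j2 j3 : Z) t1 t2 t3 : BUC T5 C -> s_only C ->
  Homog (fun p => C p * (cos (2 * PI * IZR j1 * gy1 p + t1) * cos (2 * PI * IZR j2 * gy2 p + t2) *
                        cos (2 * PI * IZR j3 * gy3 p + t3))).
Proof.
  intros BC SC.
  apply Homog_ext with (fun p => / 4 * mode_fun C j1 j2 j3 (t1 + t2 + t3) p + / 4 * mode_fun C j1 j2 (- j3) (t1 + t2 - t3) p
     + / 4 * mode_fun C j1 (- j2) j3 (t1 - t2 + t3) p + / 4 * mode_fun C j1 (- j2) (- j3) (t1 - t2 - t3) p).
  - repeat apply Homog_plus; apply Homog_scal; apply Homog_mode; auto.
  - intros p. unfold mode_fun. rewrite cos_triple_product. rewrite !opp_IZR.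
    set (A := 2 * PI * IZR j1 * gy1 p + t1). set (B := 2 * PI * IZR j2 * gy2 p + t2). set (D := 2 * PI * IZR j3 * gy3 p + t3).
    replace (2 * PI * (IZR j1 * gy1 p + IZR j2 * gy2 p + IZR j3 * gy3 p) + (t1 + t2 + t3)) with (A + B + D) by (unfold A, B, D; ring).
    replace (2 * PI * (IZR j1 * gy1 p + IZR j2 * gy2 p + - IZR j3 * gy3 p) + (t1 + t2 - t3)) with (A + B - D) by (unfold A, B, D; ring).
    replace (2 * PI * (IZR j1 * gy1 p + - IZR j2 * gy2 p + IZR j3 * gy3 p) + (t1 - t2 + t3)) with (A - B + D) by (unfold A, B, D; ring).
    replace (2 * PI * (IZR j1 * gy1 p + - IZR j2 * gy2 p + - IZR j3 * gy3 p) + (t1 - t2 - t3)) with (A - B - D) by (unfold A, B, D; ring).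
    ring.
Qed.

Lemma Homog_pint_cube_plus F G : BUC T8 F -> BUC T8 G -> Homog (pint_cube F) -> Homog (pint_cube G) -> Homog (pint_cube (fun w => F w + G w)).
Proof.
  intros BF BG HF HG. apply Homog_ext with (fun p => pint_cube F p + pint_cube G p).
  apply Homog_plus; auto. intros p; symmetry; apply pint_cube_plus; auto.
Qed.

Lemma Homog_pint_cube_scal c F : BUC T8 F -> Homog (pint_cube F) -> Homog (pint_cube (fun w => c * F w)).
Proof.
  intros BF HF. apply Homog_ext with (fun p => c * pint_cube F p).
  apply Homog_scal; auto. intros p; symmetry; apply pint_cube_scal; auto.
Qed.

Definition cos_kernel (j : Z) th (l : R -> R) := fun y z => cos (2 * PI * IZR j * y + th) * l z.

(* For elementary kernels the convolution factors as C(s) times a product of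
   cosines in y, so it homogenizes by [Homog_cos3]. *)
Lemma conv_homog_base j1 t1 l1 j2 t2 l2 j3 t3 l3 Psi : UCR l1 -> BD l1 -> UCR l2 -> BD l2 -> UCR l3 -> BD l3 ->
  BUC T5 Psi -> Homog (pint_cube (conv_integrand (cos_kernel j1 t1 l1) (cos_kernel j2 t2 l2) (cos_kernel j3 t3 l3) Psi)).
Proof.
  intros U1 B1 U2 B2 U3 B3 BP.
  set (Gb := fun w : T8 => l1 (snd (fst (fst w))) * l2 (snd (fst w)) * l3 (snd w) *
      Psi (mk5 (gs2 (fst (fst (fst w)))) (gs1 (fst (fst (fst w)))) (snd (fst (fst w))) (snd (fst w)) (snd w))).
  assert (BGb : BUC T8 Gb).
  { apply BUC_ext with (conv_integrand (cos_kernel 0 0 l1) (cos_kernel 0 0 l2) (cos_kernel 0 0 l3) Psi).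
    apply BUC_conv_integrand; auto; apply sk_base; auto.
    intros w. unfold conv_integrand, cos_kernel, Gb. simpl. rewrite !Rmult_0_r, !Rmult_0_l, !Rplus_0_r, cos_0. ring. }
  set (Pc := fun p => cos (2 * PI * IZR j1 * gy1 p + t1) * cos (2 * PI * IZR j2 * gy2 p + t2) *
                        cos (2 * PI * IZR j3 * gy3 p + t3)).
  apply Homog_ext with (fun p => pint_cube Gb p * Pc p).
  - apply Homog_cos3. apply pint_cube_BUC; auto.
    intros p q H1 H2. unfold pint_cube, pint, Gb. simpl. rewrite H1, H2. reflexivity.
  - intros p. unfold pint_cube. rewrite Rmult_comm. symmetry.
    apply (pint_pull T5 0 1 _ _ Pc p). repeat apply pint_BUC; auto; lra.
    intros t. apply (pint_pull T6 0 1 _ _ (fun w => Pc (fst w)) (p, t)). apply pint_BUC; auto; lra.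
    intros t'. apply (pint_pull T7 0 1 _ _ (fun w => Pc (fst (fst w))) (p, t, t')). auto.
    intros t''. unfold conv_integrand, cos_kernel, Gb, Pc. simpl. ring.
Qed.

Lemma conv_homog_good3 j1 t1 l1 j2 t2 l2 k3 Psi : UCR l1 -> BD l1 -> UCR l2 -> BD l2 -> SepK k3 ->
  BUC T5 Psi -> Homog (pint_cube (conv_integrand (cos_kernel j1 t1 l1) (cos_kernel j2 t2 l2) k3 Psi)).
Proof.
  intros U1 B1 U2 B2 S3 BP. assert (S1 : SepK (cos_kernel j1 t1 l1)) by (apply sk_base; auto).
  assert (S2 : SepK (cos_kernel j2 t2 l2)) by (apply sk_base; auto).
  induction S3.
  - apply conv_homog_base; auto.
  - replace (conv_integrand (cos_kernel j1 t1 l1) (cos_kernel j2 t2 l2) (fun y z => k y z + k' y z) Psi) with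
      (fun w => conv_integrand (cos_kernel j1 t1 l1) (cos_kernel j2 t2 l2) k Psi w + conv_integrand (cos_kernel j1 t1 l1) (cos_kernel j2 t2 l2) k' Psi w)
      by (apply functional_extensionality; intros; unfold conv_integrand; ring).
    apply Homog_pint_cube_plus; auto; apply BUC_conv_integrand; auto.
  - replace (conv_integrand (cos_kernel j1 t1 l1) (cos_kernel j2 t2 l2) (fun y z => c * k y z) Psi) with
      (fun w => c * conv_integrand (cos_kernel j1 t1 l1) (cos_kernel j2 t2 l2) k Psi w)
      by (apply functional_extensionality; intros; unfold conv_integrand; ring).
    apply Homog_pint_cube_scal; auto; apply BUC_conv_integrand; auto.
  - replace k' with k; auto. apply functional_extensionality; intros; apply functional_extensionality; auto.
Qed.

Lemma conv_homog_good2 j1 t1 l1 k2 k3 Psi : UCR l1 -> BD l1 -> SepK k2 -> SepK k3 ->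
  BUC T5 Psi -> Homog (pint_cube (conv_integrand (cos_kernel j1 t1 l1) k2 k3 Psi)).
Proof.
  intros U1 B1 S2 S3 BP. assert (S1 : SepK (cos_kernel j1 t1 l1)) by (apply sk_base; auto).
  induction S2.
  - apply conv_homog_good3; auto.
  - replace (conv_integrand (cos_kernel j1 t1 l1) (fun y z => k y z + k' y z) k3 Psi) with
      (fun w => conv_integrand (cos_kernel j1 t1 l1) k k3 Psi w + conv_integrand (cos_kernel j1 t1 l1) k' k3 Psi w)
      by (apply functional_extensionality; intros; unfold conv_integrand; ring).
    apply Homog_pint_cube_plus; auto; apply BUC_conv_integrand; auto.
  - replace (conv_integrand (cos_kernel j1 t1 l1) (fun y z => c * k y z) k3 Psi) with
      (fun w => c * conv_integrand (cos_kernel j1 t1 l1) k k3 Psi w)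
      by (apply functional_extensionality; intros; unfold conv_integrand; ring).
    apply Homog_pint_cube_scal; auto; apply BUC_conv_integrand; auto.
  - replace k' with k; auto. apply functional_extensionality; intros; apply functional_extensionality; auto.
Qed.

Lemma conv_homog_good k1 k2 k3 Psi : SepK k1 -> SepK k2 -> SepK k3 ->
  BUC T5 Psi -> Homog (pint_cube (conv_integrand k1 k2 k3 Psi)).
Proof.
  intros S1 S2 S3 BP. induction S1.
  - apply conv_homog_good2; auto.
  - replace (conv_integrand (fun y z => k y z + k' y z) k2 k3 Psi) with
      (fun w => conv_integrand k k2 k3 Psi w + conv_integrand k' k2 k3 Psi w)
      by (apply functional_extensionality; intros; unfold conv_integrand; ring).
    apply Homog_pint_cube_plus; auto; apply BUC_conv_integrand; auto.
  - replace (conv_integrand (fun y z => c * k y z) k2 k3 Psi) with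
      (fun w => c * conv_integrand k k2 k3 Psi w)
      by (apply functional_extensionality; intros; unfold conv_integrand; ring).
    apply Homog_pint_cube_scal; auto; apply BUC_conv_integrand; auto.
  - replace k' with k; auto. apply functional_extensionality; intros; apply functional_extensionality; auto.
Qed.

End Main.

Definition vp_pow (N : nat) (x : R) := (1 + cos (2 * PI * x)) ^ N.

Lemma vp_pow_cont N x : contR (vp_pow N) x.
Proof. apply (ex_derive_continuous (V := R_NormedModule) (vp_pow N)). unfold vp_pow. auto_derive. auto. Qed.

Lemma shift_int f y : (forall x, contR f x) -> (forall x, f (x + 1) = f x) ->
  RInt (fun z => f (y - z)) 0 1 = RInt f 0 1.
Proof.
  intros Hc Hp.
  assert (Ex : forall a b, ex_RInt f a b) by (intros; apply ex_RInt_cont; auto).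
  assert (E1 : RInt (fun z => scal (-1) (f (-1 * z + y))) 0 1 = RInt f (-1 * 0 + y) (-1 * 1 + y)).
  { apply (RInt_comp_lin (V := R_CompleteNormedModule)). auto. }
  assert (E2 : RInt (fun z => scal 1 (f (1 * z + -1))) y 1 = RInt f (1 * y + -1) (1 * 1 + -1)).
  { apply (RInt_comp_lin (V := R_CompleteNormedModule)). auto. }
  rewrite (RInt_ext (fun z => scal (-1) (f (-1 * z + y))) (fun z => -1 * f (y - z))) in E1.
  2:{ intros; unfold scal; simpl; unfold mult; simpl. f_equal. f_equal. ring. }
  rewrite (RInt_ext (fun z => scal 1 (f (1 * z + -1))) f) in E2.
  2:{ intros x _. unfold scal; simpl; unfold mult; simpl. rewrite Rmult_1_l.
      rewrite <- (Hp (1 * x + -1)). f_equal. ring. }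
  rewrite RInt_scalR in E1.
  2:{ apply ex_RInt_cont. intros x. apply (continuous_comp (fun z => y - z) f).
      apply (ex_derive_continuous (V := R_NormedModule) (fun z => y - z)); auto_derive; auto. apply Hc. }
  replace (-1 * 0 + y) with y in E1 by ring. replace (-1 * 1 + y) with (y - 1) in E1 by ring.
  replace (1 * y + -1) with (y - 1) in E2 by ring. replace (1 * 1 + -1) with 0 in E2 by ring.
  assert (Ch1 := RInt_Chasles (V := R_CompleteNormedModule) f (y - 1) 0 y (Ex _ _) (Ex _ _)).
  assert (Ch2 := RInt_Chasles (V := R_CompleteNormedModule) f 0 y 1 (Ex _ _) (Ex _ _)).
  assert (Sw := opp_RInt_swap (V := R_CompleteNormedModule) f y (y - 1) (Ex _ _)).
  simpl in *. unfold plus, opp in *; simpl in *.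
  lra.
Qed.

Lemma vp_pow_deriv N x : is_derive (fun x => vp_pow N x * sin (2 * PI * x)) x
  (2 * PI * (vp_pow N x * (1 - (INR N + 1) * (1 - cos (2 * PI * x))))).
Proof.
  unfold vp_pow. auto_derive; auto.
  set (c := cos (2 * PI * x)). set (s := sin (2 * PI * x)).
  assert (Hs : s * s = 1 - c * c) by (unfold s, c; pose proof (sin2_cos2 (2 * PI * x)); unfold Rsqr in H; lra).
  destruct N as [|n].
  - simpl. ring.
  - simpl pred. rewrite S_INR. simpl pow. set (Q := (1 + c) ^ n).
    replace (2 * PI * 1 * - s * ((INR n + 1) * Q) * s) with (- 2 * PI * (INR n + 1) * Q * (s * s)) by ring.
    rewrite Hs. ring.
Qed.

(* int vp_pow = (N+1) int vp_pow * ecos: the kernel concentrates at 0 as N grows. *)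
Lemma vp_pow_moment N : RInt (vp_pow N) 0 1 = (INR N + 1) * RInt (fun x => vp_pow N x * (1 - cos (2 * PI * x))) 0 1.
Proof.
  set (F := fun x => vp_pow N x * sin (2 * PI * x)).
  set (g := fun x => 2 * PI * (vp_pow N x * (1 - (INR N + 1) * (1 - cos (2 * PI * x))))).
  assert (Cg : forall x, contR g x).
  { intros x. apply (ex_derive_continuous (V := R_NormedModule) g). unfold g, vp_pow. auto_derive. auto. }
  assert (HI : is_RInt g 0 1 (minus (F 1) (F 0))).
  { apply (is_RInt_derive (V := R_CompleteNormedModule) F g).
    - intros x _. apply vp_pow_deriv.
    - intros x _. apply Cg. }
  apply (is_RInt_unique (V := R_CompleteNormedModule)) in HI.
  assert (HF : minus (F 1) (F 0) = 0).
  { unfold F, minus, plus, opp; simpl. rewrite Rmult_0_r, Rmult_1_r, sin_0, sin_2PI. ring. }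
  rewrite HF in HI.
  assert (ETN : ex_RInt (vp_pow N) 0 1) by (apply ex_RInt_cont; apply vp_pow_cont).
  assert (Ce : forall x, contR (fun x => vp_pow N x * (1 - cos (2 * PI * x))) x).
  { intros x. apply (ex_derive_continuous (V := R_NormedModule) (fun x => vp_pow N x * (1 - cos (2 * PI * x)))). unfold vp_pow. auto_derive. auto. }
  assert (EJ : ex_RInt (fun x => vp_pow N x * (1 - cos (2 * PI * x))) 0 1) by (apply ex_RInt_cont; auto).
  assert (E : RInt g 0 1 = 2 * PI * (RInt (vp_pow N) 0 1 - (INR N + 1) * RInt (fun x => vp_pow N x * (1 - cos (2 * PI * x))) 0 1)).
  { unfold g. rewrite RInt_scalR.
    2:{ apply ex_RInt_cont. intros x. apply (ex_derive_continuous (V := R_NormedModule)). unfold vp_pow. auto_derive. auto. }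
    f_equal. rewrite (RInt_ext_pw _ (fun x => vp_pow N x - (INR N + 1) * (vp_pow N x * (1 - cos (2 * PI * x))))) by (intros; ring).
    rewrite RInt_minusR; auto. rewrite RInt_scalR; auto.
    apply (ex_RInt_scal (V := R_NormedModule)); auto. }
  rewrite E in HI. pose proof PI_RGT_0.
  assert (HZ : RInt (vp_pow N) 0 1 - (INR N + 1) * RInt (fun x => vp_pow N x * (1 - cos (2 * PI * x))) 0 1 = 0).
  { apply Rmult_eq_reg_l with (2 * PI); [|lra]. rewrite Rmult_0_r. exact HI. }
  lra.
Qed.

Lemma vp_pow_pos N : 0 < RInt (vp_pow N) 0 1.
Proof.
  induction N.
  - unfold vp_pow. simpl. rewrite RInt_const. unfold scal; simpl; unfold mult; simpl. lra.
  - assert (ETN : ex_RInt (vp_pow N) 0 1) by (apply ex_RInt_cont; apply vp_pow_cont).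
    assert (Ce : forall x, contR (fun x => vp_pow N x * (1 - cos (2 * PI * x))) x).
    { intros x. apply (ex_derive_continuous (V := R_NormedModule) (fun x => vp_pow N x * (1 - cos (2 * PI * x)))). unfold vp_pow. auto_derive. auto. }
    assert (EJ : ex_RInt (fun x => vp_pow N x * (1 - cos (2 * PI * x))) 0 1) by (apply ex_RInt_cont; auto).
    assert (E : RInt (vp_pow (S N)) 0 1 = 2 * RInt (vp_pow N) 0 1 - RInt (fun x => vp_pow N x * (1 - cos (2 * PI * x))) 0 1).
    { rewrite (RInt_ext_pw _ (fun x => 2 * vp_pow N x - vp_pow N x * (1 - cos (2 * PI * x)))).
      2:{ intros x. unfold vp_pow. simpl. ring. }
      rewrite RInt_minusR; auto. rewrite RInt_scalR; auto.
      apply (ex_RInt_scal (V := R_NormedModule)); auto. }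
    rewrite E. pose proof (vp_pow_moment N). pose proof (pos_INR N).
    assert (RInt (fun x => vp_pow N x * (1 - cos (2 * PI * x))) 0 1 = RInt (vp_pow N) 0 1 / (INR N + 1)).
    { assert (G : forall I J : R, I = (INR N + 1) * J -> J = I / (INR N + 1)) by (intros I J HIJ; subst; field; lra).
      apply G; auto. }
    rewrite H1. apply Rlt_le_trans with (2 * RInt (vp_pow N) 0 1 - RInt (vp_pow N) 0 1).
    lra. apply Rplus_le_compat_l. apply Ropp_le_contravar.
    unfold Rdiv. rewrite <- (Rmult_1_r (RInt (vp_pow N) 0 1)) at 2. apply Rmult_le_compat_l; [lra|].
    rewrite <- Rinv_1. apply Rinv_le_contravar; lra.
Qed.

Lemma vp_pow_nonneg N x : 0 <= vp_pow N x.
Proof. unfold vp_pow. apply pow_le. pose proof (COS_bound (2 * PI * x)). lra. Qed.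

Lemma vp_pow_per N x : vp_pow N (x + 1) = vp_pow N x.
Proof. unfold vp_pow. rewrite cos_per1. auto. Qed.

(* Its mass, the normalised kernel in y - z, the function ecos, which measures
   the distance to the lattice Z, and the ecos-weighted kernel. *)
Definition vp_mass N := RInt (vp_pow N) 0 1.
Definition vp_kernel N := fun y z => / vp_mass N * vp_pow N (y - z).
Definition ecos x := 1 - cos (2 * PI * x).
Definition vp_kernel_e N := fun y z => vp_kernel N y z * ecos (y - z).

Lemma vp_kernel_int N y : RInt (fun z => vp_kernel N y z) 0 1 = 1.
Proof.
  unfold vp_kernel. rewrite RInt_scalR.
  - rewrite (shift_int (vp_pow N) y) by (auto using vp_pow_cont, vp_pow_per). fold (vp_mass N).
    pose proof (vp_pow_pos N). fold (vp_mass N) in H. apply Rinv_l. lra.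
  - apply ex_RInt_cont. intros z. apply (continuous_comp (fun z => y - z) (vp_pow N)).
    apply (ex_derive_continuous (V := R_NormedModule) (fun z => y - z)); auto_derive; auto. apply vp_pow_cont.
Qed.

Lemma cont_vp_pow_e N x : contR (fun x => vp_pow N x * ecos x) x.
Proof. apply (ex_derive_continuous (V := R_NormedModule)). unfold vp_pow, ecos. auto_derive. auto. Qed.

Lemma vp_kernel_int_e N y : RInt (fun z => vp_kernel N y z * ecos (y - z)) 0 1 = / (INR N + 1).
Proof.
  unfold vp_kernel. rewrite (RInt_ext_pw _ (fun z => / vp_mass N * (fun x => vp_pow N x * ecos x) (y - z))) by (intros; ring).
  rewrite RInt_scalR.
  - rewrite (shift_int (fun x => vp_pow N x * ecos x) y).
    + unfold ecos. pose proof (vp_pow_moment N). pose proof (vp_pow_pos N). fold (vp_mass N) in *. pose proof (pos_INR N).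
      assert (G : forall I J : R, 0 < I -> I = (INR N + 1) * J -> / I * J = / (INR N + 1)) by (intros I J HI HIJ; subst; assert (0 < J) by nra; field; lra).
      apply G; auto.
    + apply cont_vp_pow_e.
    + intros x. unfold ecos. rewrite vp_pow_per, cos_per1. auto.
  - apply ex_RInt_cont. intros z. apply (continuous_comp (fun z => y - z) (fun x => vp_pow N x * ecos x)).
    apply (ex_derive_continuous (V := R_NormedModule) (fun z => y - z)); auto_derive; auto. apply cont_vp_pow_e.
Qed.

Lemma near_or_far x rho : 0 < rho <= 1/2 ->
  (exists n : Z, Rabs (x - IZR n) < rho) \/ 1 - cos (2 * PI * rho) <= ecos x.
Proof.
  intros Hr. destruct (archimed (x + 1/2)) as [H1 H2].
  set (k := (up (x + 1/2) - 1)%Z). assert (Hk : IZR k = IZR (up (x + 1/2)) - 1) by (unfold k; rewrite minus_IZR; auto).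
  set (r := x - IZR k).
  assert (Hr1 : -1/2 <= r < 1/2) by (unfold r; rewrite Hk; lra).
  destruct (Rlt_dec (Rabs r) rho) as [L|L].
  - left. exists k. auto.
  - right. unfold ecos.
    assert (E : cos (2 * PI * x) = cos (2 * PI * Rabs r)).
    { replace (2 * PI * x) with (2 * PI * IZR k + 2 * PI * r) by (unfold r; ring). rewrite cos_2kpi.
      unfold Rabs; destruct Rcase_abs; auto. replace (2 * PI * - r) with (- (2 * PI * r)) by ring. rewrite cos_neg; auto. }
    rewrite E. pose proof PI_RGT_0.
    assert (Rabs r <= 1/2) by (apply Rabs_le; lra).
    assert (cos (2 * PI * Rabs r) <= cos (2 * PI * rho)).
    { apply cos_decr_1; try nra. }
    lra.
Qed.

Lemma ecos_nonneg x : 0 <= ecos x.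
Proof. unfold ecos. pose proof (COS_bound (2 * PI * x)). lra. Qed.
Lemma ecos_sym x y : ecos (x - y) = ecos (y - x).
Proof. unfold ecos. replace (2 * PI * (x - y)) with (- (2 * PI * (y - x))) by ring. rewrite cos_neg. auto. Qed.

Lemma SepK_vp_kernel N : SepK (vp_kernel N).
Proof.
  apply sk_ext with (fun y z => / vp_mass N * (fun y z => (1 + cos (2 * PI * (y - z))) ^ N) y z).
  apply sk_scal, SepK_kernel. intros; unfold vp_kernel, vp_pow; auto.
Qed.

(* ecos (y - z) is separable: cos(2 pi (y - z)) = cos cos + sin sin. *)
Lemma SepK_ecos : SepK (fun y z => ecos (y - z)).
Proof.
  assert (Hs : forall x, cos (x + - (PI / 2)) = sin x).
  { intros x. rewrite <- cos_neg. replace (- (x + - (PI / 2))) with (PI / 2 - x) by ring. apply cos_shift. }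
  apply sk_ext with (fun y z => cos (2 * PI * IZR 0 * y + 0) * (fun _ => 1) z +
     (-1) * (cos (2 * PI * IZR 1 * y + 0) * (fun z => cos (2 * PI * z + 0)) z) +
     (-1) * (cos (2 * PI * IZR 1 * y + - (PI / 2)) * (fun z => cos (2 * PI * z + - (PI / 2))) z)).
  - apply sk_plus; [apply sk_plus|]; try apply sk_scal; apply sk_base; try apply UCR_const; try apply BD_const;
      try apply UCR_cos_lin; exists 1; intros; apply Rabs_le; apply COS_bound.
  - intros y z. unfold ecos. simpl. rewrite Rmult_0_r, Rmult_0_l, Rplus_0_l, cos_0, !Rmult_1_r, !Rplus_0_r, !Hs.
    replace (2 * PI * (y - z)) with (2 * PI * y - 2 * PI * z) by ring. rewrite cos_minus. ring.
Qed.

Lemma SepK_vp_kernel_e N : SepK (vp_kernel_e N).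
Proof. apply SepK_mult. apply SepK_vp_kernel. apply SepK_ecos. Qed.

Lemma ex_RInt_vp_kernel N y a b : ex_RInt (vp_kernel N y) a b.
Proof.
  apply ex_RInt_cont. intros z. unfold vp_kernel.
  apply (cont_mult (fun _ => / vp_mass N) (fun z => vp_pow N (y - z))); [apply cont_const|].
  apply (continuous_comp (fun z => y - z) (vp_pow N)).
  apply (ex_derive_continuous (V := R_NormedModule) (fun z => y - z)); auto_derive; auto. apply vp_pow_cont.
Qed.

Lemma ex_RInt_vp_kernel_e N y a b : ex_RInt (vp_kernel_e N y) a b.
Proof.
  apply ex_RInt_cont. intros z. unfold vp_kernel_e, vp_kernel.
  apply (ex_derive_continuous (V := R_NormedModule)). unfold vp_pow, ecos. auto_derive. auto.
Qed.

Lemma vp_kernel_nonneg N y z : 0 <= vp_kernel N y z.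
Proof. unfold vp_kernel. apply Rmult_le_pos; [left; apply Rinv_0_lt_compat, vp_pow_pos| apply vp_pow_nonneg]. Qed.

(* Near a lattice translate of y, periodicity and uniform continuity give eta;
   otherwise some ecos(y_i - z_i) >= beta > 0 ([near_or_far]) and
   |Psi - Psi| <= 2 sup|Psi| <= B beta. *)
Lemma periodic_modulus Psi : BUC T5 Psi ->
  (forall s2 s1 y1 y2 y3 (n1 n2 n3 : Z),
     Psi (mk5 s2 s1 (y1 + IZR n1) (y2 + IZR n2) (y3 + IZR n3)) = Psi (mk5 s2 s1 y1 y2 y3)) ->
  forall eta, 0 < eta -> exists B, 0 <= B /\ forall p z1 z2 z3,
    Rabs (Psi (mk5 (gs2 p) (gs1 p) z1 z2 z3) - Psi p)
      <= eta + B * (ecos (gy1 p - z1) + ecos (gy2 p - z2) + ecos (gy3 p - z3)).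
Proof.
  intros [U [M HM]] Hper eta Heta.
  assert (HM0 : 0 <= M) by (apply (BD_nonneg Psi (mk5 0 0 0 0 0)); auto).
  destruct (U eta Heta) as [rho0 [Hrho0 Hrho0']].
  set (rho := Rmin rho0 (1/2)).
  assert (Hrho : 0 < rho <= 1/2) by (unfold rho; split; [apply Rmin_pos; lra| apply Rmin_r]).
  assert (Hrr : rho <= rho0) by apply Rmin_l.
  set (beta := 1 - cos (2 * PI * rho)).
  assert (Hbeta : 0 < beta).
  { unfold beta. pose proof PI_RGT_0. assert (cos (2 * PI * rho) < cos 0) by (apply cos_decreasing_1; nra).
    rewrite cos_0 in H0. lra. }
  exists (2 * M / beta). split; [apply Rmult_le_pos; [lra| left; apply Rinv_0_lt_compat; auto]|].
  set (B := 2 * M / beta). assert (HB : 0 <= B) by (apply Rmult_le_pos; [lra| left; apply Rinv_0_lt_compat; auto]).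
  intros p z1 z2 z3.
  pose proof (ecos_nonneg (gy1 p - z1)); pose proof (ecos_nonneg (gy2 p - z2)); pose proof (ecos_nonneg (gy3 p - z3)).
  assert (Hfar : forall e, beta <= e -> Rabs (Psi (mk5 (gs2 p) (gs1 p) z1 z2 z3) - Psi p) <= B * e).
  { intros e He. apply Rle_trans with (2 * M).
    - eapply Rle_trans; [apply Rabs_triang|]. rewrite Rabs_Ropp.
      pose proof (HM (mk5 (gs2 p) (gs1 p) z1 z2 z3)). pose proof (HM p). lra.
    - apply Rle_trans with (2 * M / beta * beta); [right; field; lra|]. apply Rmult_le_compat_l; auto. }
  assert (HB1 := Rmult_le_pos _ _ HB H). assert (HB2 := Rmult_le_pos _ _ HB H0).
  assert (HB3 := Rmult_le_pos _ _ HB H1).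
  destruct (near_or_far (z1 - gy1 p) rho Hrho) as [[n1 Hn1]|F1].
  2:{ rewrite ecos_sym in F1. specialize (Hfar _ F1). nra. }
  destruct (near_or_far (z2 - gy2 p) rho Hrho) as [[n2 Hn2]|F2].
  2:{ rewrite ecos_sym in F2. specialize (Hfar _ F2). nra. }
  destruct (near_or_far (z3 - gy3 p) rho Hrho) as [[n3 Hn3]|F3].
  2:{ rewrite ecos_sym in F3. specialize (Hfar _ F3). nra. }
  assert (E : Psi (mk5 (gs2 p) (gs1 p) z1 z2 z3)
              = Psi (mk5 (gs2 p) (gs1 p) (z1 - IZR n1) (z2 - IZR n2) (z3 - IZR n3))).
  { rewrite <- (Hper _ _ (z1 - IZR n1) (z2 - IZR n2) (z3 - IZR n3) n1 n2 n3). f_equal.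
    unfold mk5. f_equal; [f_equal; [f_equal|]|]; ring. }
  rewrite E. left. apply Rlt_le_trans with eta; [|lra].
  apply Hrho0'. apply cl5. cbn [gs2 gs1 gy1 gy2 gy3 mk5 fst snd].
  rewrite !Rminus_eq_0, Rabs_R0.
  replace (z1 - IZR n1 - gy1 p) with (z1 - gy1 p - IZR n1) by ring.
  replace (z2 - IZR n2 - gy2 p) with (z2 - gy2 p - IZR n2) by ring.
  replace (z3 - IZR n3 - gy3 p) with (z3 - gy3 p - IZR n3) by ring.
  repeat split; lra.
Qed.

Definition vp_majorant N c B (w : T8) : R :=
  c * conv_integrand (vp_kernel N) (vp_kernel N) (vp_kernel N) (fun _ => 1) w +
  B * (conv_integrand (vp_kernel_e N) (vp_kernel N) (vp_kernel N) (fun _ => 1) w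
       + conv_integrand (vp_kernel N) (vp_kernel_e N) (vp_kernel N) (fun _ => 1) w
       + conv_integrand (vp_kernel N) (vp_kernel N) (vp_kernel_e N) (fun _ => 1) w).

Lemma BUC_vp_majorant N c B : BUC T8 (vp_majorant N c B).
Proof.
  assert (S1 := SepK_vp_kernel N). assert (S2 := SepK_vp_kernel_e N).
  assert (B1 : BUC T5 (fun _ => 1)) by apply BUC_const.
  unfold vp_majorant. apply BUC_plus; [apply BUC_scal; apply BUC_conv_integrand; auto|].
  apply BUC_scal. repeat apply BUC_plus; apply BUC_conv_integrand; auto.
Qed.

(* The kernel has mass 1 and its ecos-moment is 1/(N+1) ([vp_kernel_int_e]). *)
Lemma pint_cube_vp_majorant N c B p :
  pint_cube (vp_majorant N c B) p = c + 3 * B / (INR N + 1).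
Proof.
  assert (S1 := SepK_vp_kernel N). assert (S2 := SepK_vp_kernel_e N).
  assert (B1 : BUC T5 (fun _ => 1)) by apply BUC_const.
  assert (BF : forall k1 k2 k3, SepK k1 -> SepK k2 -> SepK k3 -> BUC T8 (conv_integrand k1 k2 k3 (fun _ => 1)))
    by (intros; apply BUC_conv_integrand; auto).
  unfold vp_majorant. rewrite pint_cube_plus, pint_cube_scal, pint_cube_scal, pint_cube_plus, pint_cube_plus; auto;
    try (repeat apply BUC_plus; auto); try (apply BUC_scal; repeat apply BUC_plus; auto).
  assert (EK : forall y a b, ex_RInt (vp_kernel N y) a b) by apply ex_RInt_vp_kernel.
  assert (EKe : forall y a b, ex_RInt (vp_kernel_e N y) a b) by apply ex_RInt_vp_kernel_e.
  rewrite !pint_cube_prod; auto. unfold vp_kernel_e. rewrite !vp_kernel_int, !vp_kernel_int_e.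
  pose proof (pos_INR N). field. lra.
Qed.

Lemma pint_cube_vp_const N c p :
  pint_cube (conv_integrand (vp_kernel N) (vp_kernel N) (vp_kernel N) (fun _ => c)) p = c.
Proof. rewrite pint_cube_prod; try apply ex_RInt_vp_kernel. rewrite !vp_kernel_int. ring. Qed.

(* Uniform approximation of a periodic BUC function by its convolution in y
   with the de la Vallee-Poussin kernel: the error at p is at most
   eta/2 + 3 B/(N+1) by [periodic_modulus]. *)
Theorem vp_convolution_approx Psi : BUC T5 Psi ->
  (forall s2 s1 y1 y2 y3 (n1 n2 n3 : Z),
     Psi (mk5 s2 s1 (y1 + IZR n1) (y2 + IZR n2) (y3 + IZR n3)) = Psi (mk5 s2 s1 y1 y2 y3)) ->
  forall eta, 0 < eta -> exists N, forall p,
    Rabs (Psi p - pint_cube (conv_integrand (vp_kernel N) (vp_kernel N) (vp_kernel N) Psi) p) <= eta.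
Proof.
  intros BP Hper eta Heta.
  destruct (periodic_modulus Psi BP Hper (eta / 2)) as [B [HB Hpt]]; [lra|].
  destruct (archimed_cor1 (eta / (6 * B + 1))) as [N [HN HN0]]. { apply Rdiv_lt_0_compat; lra. }
  exists N. intros p. assert (S1 := SepK_vp_kernel N).
  rewrite <- (pint_cube_vp_const N (Psi p) p) at 1.
  rewrite <- pint_cube_minus by (apply BUC_conv_integrand; auto; apply BUC_const).
  eapply Rle_trans.
  - apply (pint_cube_abs_le _ (vp_majorant N (eta / 2) B)); [|apply BUC_vp_majorant|].
    { apply BUC_minus; apply BUC_conv_integrand; auto. apply BUC_const. }
    intros z1 z2 z3. unfold vp_majorant, conv_integrand, vp_kernel_e. simpl.
    pose proof (vp_kernel_nonneg N (gy1 p) z1). pose proof (vp_kernel_nonneg N (gy2 p) z2).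
    pose proof (vp_kernel_nonneg N (gy3 p) z3).
    set (k1 := vp_kernel N (gy1 p) z1) in *. set (k2 := vp_kernel N (gy2 p) z2) in *.
    set (k3 := vp_kernel N (gy3 p) z3) in *.
    assert (Hk : 0 <= k1 * k2 * k3) by (apply Rmult_le_pos; [apply Rmult_le_pos|]; assumption).
    replace (k1 * k2 * k3 * Psi p - k1 * k2 * k3 * Psi (mk5 (gs2 p) (gs1 p) z1 z2 z3))
      with ((k1 * k2 * k3) * - (Psi (mk5 (gs2 p) (gs1 p) z1 z2 z3) - Psi p)) by ring.
    rewrite Rabs_mult, Rabs_Ropp, (Rabs_pos_eq (k1 * k2 * k3)) by exact Hk.
    eapply Rle_trans; [apply Rmult_le_compat_l; [exact Hk| apply Hpt]|]. right. ring.
  - rewrite pint_cube_vp_majorant.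
    pose proof (pos_INR N). assert (HNp : 0 < INR N) by (apply lt_0_INR; auto).
    assert (Hq : 3 * B / (INR N + 1) <= 3 * B * / INR N).
    { unfold Rdiv. apply Rmult_le_compat_l; [lra|]. apply Rinv_le_contravar; lra. }
    assert (Hq2 : 3 * B * / INR N <= eta / 2).
    { apply Rle_trans with (3 * B * (eta / (6 * B + 1))); [apply Rmult_le_compat_l; lra|].
      apply Rmult_le_reg_r with (6 * B + 1); [lra|].
      replace (3 * B * (eta / (6 * B + 1)) * (6 * B + 1)) with (3 * B * eta) by (field; lra). nra. }
    lra.
Qed.

Lemma Rint_RInt f g a b : ex_RInt g a b -> (forall x, Rmin a b < x < Rmax a b -> f x = g x) ->
  Rint f a b = RInt g a b.
Proof.
  intros Eg H.
  assert (Ef : ex_RInt f a b) by (apply (ex_RInt_ext (V := R_NormedModule) g); auto; intros; symmetry; auto).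
  assert (E : RInt f a b = RInt g a b) by (apply RInt_ext; auto).
  pose proof (ex_RInt_Reals_0 f a b Ef) as pr.
  unfold Rint. destruct excluded_middle_informative as [Hex|Hn].
  - destruct (constructive_indefinite_description _ Hex) as [v [pr' Hv]]. simpl.
    rewrite <- Hv, <- E. symmetry. apply RInt_Reals.
  - exfalso. apply Hn. exists (RiemannInt pr). exists pr. auto.
Qed.

Lemma deriv_within_cont a b f f' : deriv_within a b f f' -> forall s, a <= s <= b -> forall e, 0 < e ->
  exists d, 0 < d /\ forall x, a <= x <= b -> Rabs (x - s) < d -> Rabs (f x - f s) < e.
Proof.
  intros Hd s Hs e He. destruct (Hd s Hs 1 Rlt_0_1) as [del [Hdel H]].
  set (K := Rabs (f' s) + 1). assert (HK : 0 < K) by (unfold K; pose proof (Rabs_pos (f' s)); lra).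
  exists (Rmin del (e / K)). split. apply Rmin_pos; auto. apply Rdiv_lt_0_compat; auto.
  intros x Hx Hxs. destruct (Req_dec x s) as [E|E].
  - subst. rewrite Rminus_eq_0, Rabs_R0; auto.
  - set (h := x - s). assert (Hh : h <> 0) by (unfold h; lra).
    assert (Hh' : Rabs h < del) by (pose proof (Rmin_l del (e / K)); unfold h; lra).
    specialize (H h Hh Hh'). replace (s + h) with x in H by (unfold h; ring).
    specialize (H Hx).
    assert (Hq : Rabs ((f x - f s) / h) <= K).
    { replace ((f x - f s) / h) with (((f x - f s) / h - f' s) + f' s) by ring.
      eapply Rle_trans; [apply Rabs_triang|]. unfold K; lra. }
    rewrite Rabs_div in Hq by auto.
    assert (Hp : 0 < Rabs h) by (apply Rabs_pos_lt; auto).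
    assert (Rabs (f x - f s) <= K * Rabs h).
    { apply Rmult_le_reg_r with (/ Rabs h). apply Rinv_0_lt_compat; auto.
      replace (K * Rabs h * / Rabs h) with K by (field; lra). auto. }
    assert (Rabs h < e / K) by (pose proof (Rmin_r del (e / K)); unfold h; lra).
    apply Rle_lt_trans with (K * Rabs h); auto.
    replace e with (K * (e / K)) by (field; lra). apply Rmult_lt_compat_l; auto.
Qed.

Definition extend (a b : R) (f : R -> R) (t : R) : R := f (clamp a b t).

Lemma clamp_idem a b x : a <= b -> clamp a b (clamp a b x) = clamp a b x.
Proof. intros; apply clamp_id; apply clamp_in; auto. Qed.

Lemma extend_cont_of_deriv a b f f' : a <= b -> deriv_within a b f f' -> forall t, contR (extend a b f) t.
Proof.
  intros Hab Hd t. unfold extend. apply cont_pt_to. intros e He.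
  destruct (deriv_within_cont a b f f' Hd (clamp a b t) (clamp_in a b t Hab) e He) as [d [Hd' H]].
  exists d; split; auto. intros x [_ Hx]. unfold R_dist in *. simpl in *. unfold R_dist in *.
  apply H. apply clamp_in; auto. eapply Rle_lt_trans; [apply clamp_lip; auto| auto].
Qed.

Lemma extend_UCR a b f f' : a <= b -> deriv_within a b f f' -> UCR (extend a b f).
Proof.
  intros Hab Hd e He. unfold extend.
  destruct (UC_interval (extend a b f) a b Hab (extend_cont_of_deriv a b f f' Hab Hd) e He) as [d [Hd' H]].
  exists d; split; auto. intros x y Hxy.
  rewrite <- (clamp_idem a b x), <- (clamp_idem a b y) by auto.
  apply H. apply clamp_in; auto. eapply Rle_lt_trans; [apply clamp_lip; auto| auto].
Qed.

Lemma extend_deriv a b f f' : deriv_within a b f f' -> forall t, a < t < b ->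
  is_derive (extend a b f) t (extend a b f' t).
Proof.
  intros Hd t Ht. unfold extend. apply is_derive_Reals. rewrite (clamp_id a b t) by lra.
  intros e He. destruct (Hd t ltac:(lra) e He) as [del [Hdel H]].
  set (d := Rmin del (Rmin (t - a) (b - t))).
  assert (Hd0 : 0 < d) by (unfold d; repeat apply Rmin_pos; lra).
  exists (mkposreal d Hd0). simpl. intros h Hh Hhd.
  assert (Q1 : d <= del) by apply Rmin_l.
  assert (Q2 : d <= Rmin (t - a) (b - t)) by apply Rmin_r.
  pose proof (Rmin_l (t - a) (b - t)). pose proof (Rmin_r (t - a) (b - t)).
  assert (A1 : Rabs h < del) by lra.
  assert (A2 : Rabs h < t - a) by lra.
  assert (A3 : Rabs h < b - t) by lra.
  apply Rabs_lt_between in A2. apply Rabs_lt_between in A3.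
  rewrite (clamp_id a b (t + h)) by lra. rewrite (clamp_id a b t) by lra.
  apply H; auto. lra.
Qed.

Lemma extend_cont a b f : a <= b -> (forall s, a <= s <= b -> continuity_pt f s) ->
  forall t, contR (extend a b f) t.
Proof.
  intros Hab Hc t. unfold extend. apply cont_pt_to. intros e He.
  destruct (Hc (clamp a b t) (clamp_in a b t Hab) e He) as [d [Hd H]].
  exists d; split; auto. intros x [_ Hx]. simpl in *. unfold R_dist in *.
  destruct (Req_dec (clamp a b x) (clamp a b t)) as [E|E].
  - rewrite E, Rminus_eq_0, Rabs_R0; auto.
  - apply H. split. unfold D_x, no_cond; auto. simpl. unfold R_dist.
    eapply Rle_lt_trans; [apply clamp_lip; auto| auto].
Qed.

Section Statement.
Variables a1 b1 a2 b2 : R.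
Hypothesis Hab1 : a1 <= b1.
Hypothesis Hab2 : a2 <= b2.
Variable psi : R -> R -> R -> R -> R -> R.
Hypothesis Hcont : cont5_on (fun s1 s2 _ _ _ => a1 <= s1 <= b1 /\ a2 <= s2 <= b2) psi.
Hypothesis Hper : forall s1 s2 y1 y2 y3 (m1 m2 m3 : Z),
      a1 <= s1 <= b1 -> a2 <= s2 <= b2 ->
      psi s1 s2 (y1 + IZR m1) (y2 + IZR m2) (y3 + IZR m3) = psi s1 s2 y1 y2 y3.

Definition psi_ext (p : T5) : R := psi (clamp a1 b1 (gs1 p)) (clamp a2 b2 (gs2 p)) (gy1 p) (gy2 p) (gy3 p).

Lemma psi_ext_per s2 s1 y1 y2 y3 (n1 n2 n3 : Z) :
  psi_ext (mk5 s2 s1 (y1 + IZR n1) (y2 + IZR n2) (y3 + IZR n3)) = psi_ext (mk5 s2 s1 y1 y2 y3).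
Proof. unfold psi_ext. simpl. apply Hper; apply clamp_in; auto. Qed.

Lemma psi_ext_cont p : forall e, 0 < e -> exists d, 0 < d /\ forall q, cl d p q -> Rabs (psi_ext q - psi_ext p) < e.
Proof.
  intros e He.
  destruct (Hcont (clamp a1 b1 (gs1 p)) (clamp a2 b2 (gs2 p)) (gy1 p) (gy2 p) (gy3 p)
     (conj (clamp_in _ _ _ Hab1) (clamp_in _ _ _ Hab2)) e He) as [del [Hdel H]].
  exists del; split; auto. intros q Hq. apply cl5 in Hq. destruct Hq as [Q2 [Q1 [Y1 [Y2 Y3]]]].
  unfold psi_ext. apply H.
  - split; apply clamp_in; auto.
  - eapply Rle_lt_trans; [apply clamp_lip; auto|]. rewrite Rabs_minus_sym; auto.
  - eapply Rle_lt_trans; [apply clamp_lip; auto|]. rewrite Rabs_minus_sym; auto.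
  - rewrite Rabs_minus_sym; auto.
  - rewrite Rabs_minus_sym; auto.
  - rewrite Rabs_minus_sym; auto.
Qed.

Definition floorZ (x : R) : Z := (up x - 1)%Z.
Lemma floorZ_spec x : 0 <= x - IZR (floorZ x) < 1.
Proof. unfold floorZ. rewrite minus_IZR. destruct (archimed x). simpl. lra. Qed.

Definition reduce_cell (p q : T5) : T5 :=
  mk5 (clamp a2 b2 (gs2 q)) (clamp a1 b1 (gs1 q)) (gy1 q - IZR (floorZ (gy1 p))) (gy2 q - IZR (floorZ (gy2 p))) (gy3 q - IZR (floorZ (gy3 p))).

Lemma psi_ext_reduce_cell p q : psi_ext (reduce_cell p q) = psi_ext q.
Proof.
  unfold reduce_cell. rewrite (mk5_eta q) at 2.
  rewrite <- (psi_ext_per (clamp a2 b2 (gs2 q)) (clamp a1 b1 (gs1 q)) _ _ _ (floorZ (gy1 p)) (floorZ (gy2 p)) (floorZ (gy3 p))).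
  unfold psi_ext, mk5, gs1, gs2, gy1, gy2, gy3; simpl. rewrite !clamp_idem by auto. f_equal; ring.
Qed.

Definition base_box := fun p : T5 => ((((True /\ a2 <= gs2 p <= b2) /\ a1 <= gs1 p <= b1) /\ 0 <= gy1 p <= 1) /\ 0 <= gy2 p <= 1) /\ 0 <= gy3 p <= 1.

Lemma qc_base_box : qcompact T5 base_box.
Proof.
  exact (qc_prod _ _ 0 1 ltac:(lra) (qc_prod _ _ 0 1 ltac:(lra) (qc_prod _ _ 0 1 ltac:(lra)
          (qc_prod _ _ a1 b1 Hab1 (qc_prod _ _ a2 b2 Hab2 qc_unit))))).
Qed.

Lemma reduce_cell_in_box p : base_box (reduce_cell p p).
Proof.
  unfold base_box, reduce_cell. simpl. pose proof (floorZ_spec (gy1 p)). pose proof (floorZ_spec (gy2 p)). pose proof (floorZ_spec (gy3 p)).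
  pose proof (clamp_in a2 b2 (gs2 p) Hab2). pose proof (clamp_in a1 b1 (gs1 p) Hab1).
  unfold gs2, gs1, gy1, gy2, gy3 in *; simpl in *. repeat split; try lra.
Qed.

Lemma reduce_cell_cl d p q : cl d p q -> cl d (reduce_cell p p) (reduce_cell p q).
Proof.
  intros H. apply cl5 in H. destruct H as [Q2 [Q1 [Y1 [Y2 Y3]]]]. apply cl5. unfold reduce_cell.
  assert (G2 : forall a b c d e, gs2 (mk5 a b c d e) = a) by reflexivity.
  assert (G1 : forall a b c d e, gs1 (mk5 a b c d e) = b) by reflexivity.
  assert (F1 : forall a b c d e, gy1 (mk5 a b c d e) = c) by reflexivity.
  assert (F2 : forall a b c d e, gy2 (mk5 a b c d e) = d) by reflexivity.
  assert (F3 : forall a b c d e, gy3 (mk5 a b c d e) = e) by reflexivity.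
  rewrite !G2, !G1, !F1, !F2, !F3. repeat split.
  - eapply Rle_lt_trans; [apply clamp_lip; auto| auto].
  - eapply Rle_lt_trans; [apply clamp_lip; auto| auto].
  - replace (gy1 p - IZR (floorZ (gy1 p)) - (gy1 q - IZR (floorZ (gy1 p)))) with (gy1 p - gy1 q) by ring; auto.
  - replace (gy2 p - IZR (floorZ (gy2 p)) - (gy2 q - IZR (floorZ (gy2 p)))) with (gy2 p - gy2 q) by ring; auto.
  - replace (gy3 p - IZR (floorZ (gy3 p)) - (gy3 q - IZR (floorZ (gy3 p)))) with (gy3 p - gy3 q) by ring; auto.
Qed.

(* psi_ext is BUC on R^5: by periodicity it suffices to look at reduced points,
   which lie in a compact box where psi_ext is uniformly continuous and bounded. *)
Lemma psi_ext_BUC : BUC T5 psi_ext.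
Proof.
  split.
  - intros e He. destruct (qc_UC T5 base_box psi_ext qc_base_box (fun x _ => psi_ext_cont x) e He) as [d [Hd H]].
    exists d; split; auto. intros p q Hpq.
    rewrite <- (psi_ext_reduce_cell p p), <- (psi_ext_reduce_cell p q). apply H. apply reduce_cell_in_box. apply reduce_cell_cl; auto.
  - destruct (qc_bounded T5 base_box psi_ext qc_base_box (fun x _ => psi_ext_cont x)) as [M HM].
    exists M. intros p. rewrite <- (psi_ext_reduce_cell p p). apply HM. apply reduce_cell_in_box.
Qed.

Variables Y1 Y2 Y3 dY1 dY2 dY3 : R -> R.
Hypothesis HY1 : C1_on a2 b2 Y1 dY1.
Hypothesis HY2 : C1_on a2 b2 Y2 dY2.
Hypothesis HY3 : C1_on a2 b2 Y3 dY3.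
Hypothesis Hnondeg : nondegenerate a2 b2 dY1 dY2 dY3.

(* Extending the curve by constants keeps non-degeneracy, which only looks at [a2,b2]. *)
Lemma nondegenerate_extend :
  nondegenerate a2 b2 (extend a2 b2 dY1) (extend a2 b2 dY2) (extend a2 b2 dY3).
Proof.
  intros m1 m2 m3 Hm. destruct (Hnondeg m1 m2 m3 Hm) as [d0 [Hd0 [I [H1 H2]]]].
  exists d0; split; auto. exists I; split; auto. intros dl Hdl. destruct (H1 dl Hdl) as [A B].
  split; auto. intros t Ht. unfold extend. rewrite clamp_id by auto. apply B; auto.
Qed.

(* It is the uniform
   limit of its kernel convolutions ([vp_convolution_approx]), each of which
   homogenizes ([conv_homog_good]); conclude by [Homog_approx]. *)
Lemma Homog_psi_ext :
  Homog a1 b1 a2 b2 (extend a2 b2 Y1) (extend a2 b2 Y2) (extend a2 b2 Y3) psi_ext.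
Proof.
  destruct HY1 as [HY1d HY1c], HY2 as [HY2d HY2c], HY3 as [HY3d HY3c].
  assert (UY1 := extend_UCR a2 b2 Y1 dY1 Hab2 HY1d).
  assert (UY2 := extend_UCR a2 b2 Y2 dY2 Hab2 HY2d).
  assert (UY3 := extend_UCR a2 b2 Y3 dY3 Hab2 HY3d).
  apply (Homog_approx a1 b1 a2 b2 Hab1 Hab2 _ _ _ UY1 UY2 UY3 _ psi_ext_BUC). intros e He.
  destruct (vp_convolution_approx psi_ext psi_ext_BUC psi_ext_per e He) as [N HN].
  exists (pint_cube (conv_integrand (vp_kernel N) (vp_kernel N) (vp_kernel N) psi_ext)). split; auto.
  apply (conv_homog_good a1 b1 a2 b2 Hab1 Hab2 _ _ _ UY1 UY2 UY3
    _ _ _ (extend_deriv a2 b2 Y1 dY1 HY1d) (extend_deriv a2 b2 Y2 dY2 HY2d) (extend_deriv a2 b2 Y3 dY3 HY3d)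
    (extend_cont a2 b2 dY1 Hab2 HY1c) (extend_cont a2 b2 dY2 Hab2 HY2c) (extend_cont a2 b2 dY3 Hab2 HY3c)
    nondegenerate_extend); [apply SepK_vp_kernel.. | apply psi_ext_BUC].
Qed.

Lemma Rint_osc_int eps : 0 < eps ->
  Rint (fun s2 => Rint (fun s1 => psi s1 s2 (Y1 s2 / eps) (Y2 s2 / eps) (Y3 s2 / eps)) a1 b1) a2 b2
  = osc_int a1 b1 a2 b2 (extend a2 b2 Y1) (extend a2 b2 Y2) (extend a2 b2 Y3) psi_ext eps.
Proof.
  intros Heps. destruct HY1 as [HY1d _], HY2 as [HY2d _], HY3 as [HY3d _].
  assert (UY1 := extend_UCR a2 b2 Y1 dY1 Hab2 HY1d).
  assert (UY2 := extend_UCR a2 b2 Y2 dY2 Hab2 HY2d).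
  assert (UY3 := extend_UCR a2 b2 Y3 dY3 Hab2 HY3d).
  assert (BG := BUC_osc_point _ _ _ UY1 UY2 UY3 _ eps Heps psi_ext_BUC).
  unfold osc_int, pint at 1. apply Rint_RInt.
  - apply (pint_ex CSU a2 b2). apply pint_BUC; auto.
  - intros s2 Hs2. rewrite Rmin_left, Rmax_right in Hs2 by auto.
    unfold pint. apply (Rint_RInt (fun s1 => psi s1 s2 (Y1 s2 / eps) (Y2 s2 / eps) (Y3 s2 / eps))).
    + exact (pint_ex T1 a1 b1 _ (tt, s2) BG).
    + intros s1 Hs1. rewrite Rmin_left, Rmax_right in Hs1 by auto.
      unfold psi_ext, osc_point, extend, gs1, gs2, gy1, gy2, gy3. simpl.
      rewrite !(clamp_id a1 b1 s1), !(clamp_id a2 b2 s2) by lra. reflexivity.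
Qed.

Lemma Rint_mean_int :
  Rint (fun s2 => Rint (fun s1 => Rint (fun y1 => Rint (fun y2 => Rint (fun y3 =>
    psi s1 s2 y1 y2 y3) 0 1) 0 1) 0 1) a1 b1) a2 b2 = mean_int a1 b1 a2 b2 psi_ext.
Proof.
  assert (BP := psi_ext_BUC).
  unfold mean_int, pint at 1. apply Rint_RInt.
  { apply (pint_ex CSU a2 b2); repeat apply pint_BUC; auto; lra. }
  intros s2 Hs2. rewrite Rmin_left, Rmax_right in Hs2 by auto.
  unfold pint at 1. apply Rint_RInt.
  { apply (pint_ex T1 a1 b1); repeat apply pint_BUC; auto; lra. }
  intros s1 Hs1. rewrite Rmin_left, Rmax_right in Hs1 by auto.
  unfold pint at 1. apply Rint_RInt; [apply (pint_ex T2 0 1); repeat apply pint_BUC; auto; lra|].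
  intros y1 _. unfold pint at 1. apply Rint_RInt; [apply (pint_ex T3 0 1); repeat apply pint_BUC; auto; lra|].
  intros y2 _. unfold pint at 1. apply Rint_RInt; [apply (pint_ex T4 0 1); auto|].
  intros y3 _. unfold psi_ext, gs1, gs2, gy1, gy2, gy3. simpl.
  rewrite (clamp_id a1 b1 s1), (clamp_id a2 b2 s2) by lra. reflexivity.
Qed.

End Statement.

Theorem lemma6

  (a1 b1 a2 b2 : R) (Hab1 : a1 <= b1) (Hab2 : a2 <= b2)
  (psi : R -> R -> R -> R -> R -> R)
  (Hcont : cont5_on (fun s1 s2 _ _ _ => a1 <= s1 <= b1 /\ a2 <= s2 <= b2) psi)
  (Hper : forall s1 s2 y1 y2 y3 (m1 m2 m3 : Z),
      a1 <= s1 <= b1 -> a2 <= s2 <= b2 ->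
      psi s1 s2 (y1 + IZR m1) (y2 + IZR m2) (y3 + IZR m3) = psi s1 s2 y1 y2 y3)
  (Y1 Y2 Y3 dY1 dY2 dY3 : R -> R)
  (HY1 : C1_on a2 b2 Y1 dY1) (HY2 : C1_on a2 b2 Y2 dY2) (HY3 : C1_on a2 b2 Y3 dY3)
  (Hnondeg : forall m1 m2 m3 : Z, (m1, m2, m3) <> (0%Z, 0%Z, 0%Z) ->
      exists delta0, 0 < delta0 /\
      exists I : R -> list (R * R),
        (forall delta, 0 < delta < delta0 ->
           (forall p, In p (I delta) -> fst p <= snd p) /\
           (forall s2, a2 <= s2 <= b2 ->
              Rabs (IZR m1 * dY1 s2 + IZR m2 * dY2 s2 + IZR m3 * dY3 s2) <= delta ->
              exists p, In p (I delta) /\ fst p <= s2 <= snd p)) /\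
        (forall eta, 0 < eta -> exists r, 0 < r /\
           forall delta, 0 < delta < r -> delta < delta0 ->
             total_length (I delta) < eta)) :
  forall eta, 0 < eta -> exists r, 0 < r /\
    forall eps, 0 < eps < r ->
      Rabs (Rint (fun s2 => Rint (fun s1 =>
                psi s1 s2 (Y1 s2 / eps) (Y2 s2 / eps) (Y3 s2 / eps)) a1 b1) a2 b2
            - Rint (fun s2 => Rint (fun s1 =>
                Rint (fun y1 => Rint (fun y2 => Rint (fun y3 =>
                  psi s1 s2 y1 y2 y3) 0 1) 0 1) 0 1) a1 b1) a2 b2) < eta.
Proof.
  intros eta Heta.
  destruct (Homog_psi_ext a1 b1 a2 b2 Hab1 Hab2 psi Hcont Hper Y1 Y2 Y3 dY1 dY2 dY3 HY1 HY2 HY3 Hnondeg)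
    as [_ Hlim].
  destruct (Hlim eta Heta) as [r [Hr Hclose]].
  exists r; split; [exact Hr|]. intros eps Heps.
  rewrite (Rint_osc_int a1 b1 a2 b2 Hab1 Hab2 psi Hcont Hper Y1 Y2 Y3 dY1 dY2 dY3 HY1 HY2 HY3 eps) by lra.
  rewrite (Rint_mean_int a1 b1 a2 b2 Hab1 Hab2 psi Hcont Hper).
  exact (Hclose eps Heps).
Qed.
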